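(* Let $w\ge 4$ and $u=w-2$. Then $$\sum_{\substack{a+b+c=w\\ a\ge2,\ b,c\ge1}} T(a,b,c)=\frac23T(2)T(u)-2T(u,2)+4\Big(\zeta(u,\bar1,1)-\zeta(\bar u,1,1)+\zeta(\bar u,1,\bar1)-\zeta(u,\bar1,\bar1)\Big).$$
   Context: Multiple $T$-values: for positive integers $s_1,\dots,s_d$ with $s_1>1$, $T(s_1,\dots,s_d)=\sum_{m_1>\dots>m_d>0,\ m_j\equiv d-j+1\ (\mathrm{mod}\ 2)}\frac{2^d}{m_1^{s_1}\cdots m_d^{s_d}}$. Euler sums: $\zeta(s_1,\dots,s_d;z_1,\dots,z_d)=\sum_{n_1>\dots>n_d>0}\frac{z_1^{n_1}\cdots z_d^{n_d}}{n_1^{s_1}\cdots n_d^{s_d}}$, $z_j\in\{\pm1\}$; a bar over the $j$-th argument means $z_j=-1$, no bar means $z_j=1$. *)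

From Stdlib Require Import Reals List Arith.
From Coquelicot Require Import Coquelicot.
Open Scope R_scope.

(* nsum [f1;...;fd] N = sum_{N >= m1 > m2 > ... > md > 0} f1 m1 * ... * fd md *)
Fixpoint nsum (fs : list (nat -> R)) (N : nat) : R :=
  match fs with
  | nil => 1
  | f :: fs' =>
      let fix aux (n : nat) : R :=
        match n with
        | O => 0
        | S k => aux k + f (S k) * nsum fs' k
        end
      in aux N
  end.

(* Value of the iterated series: limit of the truncations at m1 <= N.
   (All series used below are absolutely convergent, so this is the sum.) *)
Definition nseries (fs : list (nat -> R)) : R :=
  real (Lim_seq (fun N => nsum fs N)).

(* Multiple T-value: factor for position j (1-indexed, j = i+1) is
   2 / m^{s_j} restricted to m ≡ d - j + 1 (mod 2). *)
Definition Tfactor (d i s : nat) (m : nat) : R :=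
  if Bool.eqb (Nat.even m) (Nat.even (d - i)) then 2 / (INR m ^ s) else 0.

Definition Tval (s : list nat) : R :=
  nseries (map (fun i => Tfactor (length s) i (nth i s O)) (seq 0 (length s))).

(* Euler sums: each argument is (s_j, barred_j); barred means z_j = -1. *)
Definition Efactor (a : nat * bool) (m : nat) : R :=
  (if snd a then (-1) ^ m else 1) / (INR m ^ fst a).

Definition Ezeta (l : list (nat * bool)) : R := nseries (map Efactor l).

From Stdlib Require Import Reals List Arith Lra Lia.
From Coquelicot Require Import Coquelicot.
Open Scope R_scope.

(* Write m1 = 2t1+1 > m2 = 2t2+2 > m3 = 2t3+1 for the summation indices of T(a,b,c). Summed over
   the compositions a+b+c = w, the monomials m1^-a m2^-b m3^-c form a complete homogeneous
   polynomial, hence three partial fractions in m1, m2, m3, and each is summed over the chains: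
   the m1-term gives sum_t A(t)/(2t+1)^u, where A(t) sums 1/(m2 m3) over even m2 > odd m3 below
   2t+1; the m2-term gives sum_t H(t+1)^2/(2t+2)^u, H being the odd harmonic numbers; the m3-term
   gives sum_t (A(t) + l/3)/(2t+1)^u with l = sum_t 1/(2t+1)^2 = T(2)/2. The constant l/3 is the
   limit of an inner sum D with D + U -> l (summation by parts) and D -> U/2 (telescoping).
   Writing H^2 as twice its off-diagonal part B plus its diagonal, and splitting the alternating
   Euler sums along the parity of the first index, both sides become the same combination of
   sum_t A(t)/(2t+1)^u, sum_t B(t)/(2t+2)^u, T(u) and T(u,2). All series are dominated by
   sum_t H(t+1)^2/(2t+1)^2 <= 6, which a telescoping potential bounds. *)

Fixpoint psum (f : nat -> R) (n : nat) : R :=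
  match n with O => 0 | S k => psum f k + f k end.

Lemma psum_recr f n : psum f (S n) = psum f n + f n.
Proof. reflexivity. Qed.

Lemma psum_ext f g n : (forall k, (k < n)%nat -> f k = g k) -> psum f n = psum g n.
Proof.
  induction n as [|n IH]; intros Hfg; simpl; [reflexivity|].
  rewrite IH by (intros; apply Hfg; lia).
  rewrite Hfg by lia. reflexivity.
Qed.

Lemma psum_const c n : psum (fun _ => c) n = INR n * c.
Proof. induction n as [|n IH]; [simpl; ring|]. rewrite psum_recr, IH, S_INR. ring. Qed.

Lemma psum_eq0 f n : (forall k, (k < n)%nat -> f k = 0) -> psum f n = 0.
Proof. intros H. rewrite (psum_ext f (fun _ => 0)), psum_const by assumption. ring. Qed.

Lemma psum_plus f g n : psum (fun k => f k + g k) n = psum f n + psum g n.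
Proof. induction n as [|n IH]; simpl; [lra|rewrite IH; lra]. Qed.

Lemma psum_minus f g n : psum (fun k => f k - g k) n = psum f n - psum g n.
Proof. induction n as [|n IH]; simpl; [lra|rewrite IH; lra]. Qed.

Lemma psum_scal_l c f n : psum (fun k => c * f k) n = c * psum f n.
Proof. induction n as [|n IH]; simpl; [lra|rewrite IH; lra]. Qed.

Lemma psum_scal_r c f n : psum (fun k => f k * c) n = psum f n * c.
Proof. induction n as [|n IH]; simpl; [lra|rewrite IH; lra]. Qed.

Lemma psum_le f g n : (forall k, (k < n)%nat -> f k <= g k) -> psum f n <= psum g n.
Proof.
  induction n as [|n IH]; intros Hfg; simpl; [lra|].
  assert (psum f n <= psum g n) by (apply IH; intros; apply Hfg; lia).
  assert (f n <= g n) by (apply Hfg; lia).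
  lra.
Qed.

Lemma psum_nonneg f n : (forall k, (k < n)%nat -> 0 <= f k) -> 0 <= psum f n.
Proof. intros H. rewrite <- (psum_eq0 (fun _ => 0) n) by reflexivity. now apply psum_le. Qed.

Lemma psum_le_len f n m : (forall k, 0 <= f k) -> (n <= m)%nat -> psum f n <= psum f m.
Proof.
  intros Hf Hnm. induction Hnm as [|m _ IH]; [lra|].
  rewrite psum_recr. specialize (Hf m). lra.
Qed.

Lemma psum_recl f n : psum f (S n) = f O + psum (fun k => f (S k)) n.
Proof. induction n as [|n IH]; simpl in *; [lra|]. rewrite IH. lra. Qed.

Lemma psum_split f n m : psum f (n + m) = psum f n + psum (fun k => f (n + k)%nat) m.
Proof.
  induction m as [|m IH]; simpl; [rewrite Nat.add_0_r; lra|].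
  rewrite Nat.add_succ_r. simpl. rewrite IH. lra.
Qed.

Lemma psum_rev f n : psum (fun k => f (n - S k)%nat) n = psum f n.
Proof.
  induction n as [|n IH]; [reflexivity|].
  rewrite psum_recl, psum_recr. replace (S n - 1)%nat with n by lia.
  rewrite <- IH. rewrite (psum_ext _ (fun k => f (n - S k)%nat)) by (intros; f_equal; lia).
  lra.
Qed.

Lemma psum_even_odd f n : psum f (2 * n) = psum (fun t => f (2 * t)%nat + f (S (2 * t))) n.
Proof.
  induction n as [|n IH]; [reflexivity|].
  replace (2 * S n)%nat with (S (S (2 * n))) by lia.
  rewrite !psum_recr, IH. lra.
Qed.

Lemma psum_single f n k : (k < n)%nat ->
  (forall j, (j < n)%nat -> j <> k -> f j = 0) -> psum f n = f k.
Proof.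
  intros Hk H. replace n with (k + (1 + (n - S k)))%nat by lia.
  rewrite psum_split, psum_split, psum_eq0, (psum_eq0 (fun j => f (k + (1 + j))%nat))
    by (intros; apply H; lia).
  simpl. rewrite Nat.add_0_r. ring.
Qed.

Lemma psum_window (f : nat -> R) lo hi n : (lo <= hi)%nat -> (hi < n)%nat ->
  psum (fun i => if (Nat.leb lo i && Nat.leb i hi)%bool then f i else 0) n =
  psum (fun j => f (lo + j)%nat) (S (hi - lo)).
Proof.
  intros Hlo Hhi. replace n with (lo + (S (hi - lo) + (n - S hi)))%nat by lia.
  rewrite psum_split, psum_split, psum_eq0, (psum_eq0 _ (n - S hi)).
  - rewrite Rplus_0_l, Rplus_0_r. apply psum_ext. intros k Hk.
    replace (Nat.leb lo (lo + k) && Nat.leb (lo + k) hi)%bool with true; [reflexivity|].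
    symmetry. apply Bool.andb_true_iff. split; apply Nat.leb_le; lia.
  - intros k Hk. replace (Nat.leb (lo + (S (hi - lo) + k)) hi) with false
      by (symmetry; apply Nat.leb_gt; lia).
    now rewrite Bool.andb_false_r.
  - intros k Hk. now replace (Nat.leb lo k) with false by (symmetry; apply Nat.leb_gt; lia).
Qed.

Lemma psum_triangle (F : nat -> nat -> R) n :
  psum (fun a => psum (fun b => F a b) (S a)) n =
  psum (fun b => psum (fun k => F (b + k)%nat b) (n - b)) n.
Proof.
  induction n as [|n IH]; [reflexivity|].
  rewrite psum_recr, IH.
  rewrite (psum_recr (fun b => psum (fun k => F (b + k)%nat b) (S n - b))).
  rewrite (psum_ext (fun b => psum (fun k => F (b + k)%nat b) (S n - b))
             (fun b => psum (fun k => F (b + k)%nat b) (n - b) + F n b)).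
  2:{ intros b Hb. replace (S n - b)%nat with (S (n - b)) by lia.
      rewrite psum_recr. do 2 f_equal. lia. }
  rewrite psum_plus. replace (S n - n)%nat with 1%nat by lia.
  simpl. rewrite Nat.add_0_r. change (fun b => F n b) with (F n). lra.
Qed.

Lemma psum_triangle_strict (F : nat -> nat -> R) n :
  psum (fun a => psum (fun b => F a b) a) n =
  psum (fun b => psum (fun k => F (S b + k)%nat b) (n - S b)) n.
Proof.
  destruct n as [|n]; [reflexivity|].
  rewrite psum_recl, (psum_triangle (fun a b => F (S a) b) n), psum_recr.
  replace (S n - S n)%nat with O by lia. simpl psum at 1.
  rewrite Rplus_0_l, Rplus_0_r. apply psum_ext. intros b Hb.
  now replace (S n - S b)%nat with (n - b)%nat by lia.
Qed.

Lemma sum_f_R0_psum f n : sum_f_R0 f n = psum f (S n).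
Proof. induction n as [|n IH]; simpl; [ring|]. rewrite IH. simpl. ring. Qed.

Definition seq_lim (u : nat -> R) : R := real (Lim_seq u).

Lemma seq_lim_eq u (l : R) : is_lim_seq u l -> seq_lim u = l.
Proof. intros H. unfold seq_lim. now rewrite (is_lim_seq_unique _ _ H). Qed.

Lemma is_lim_seq_lim u : (exists l : R, is_lim_seq u l) -> is_lim_seq u (seq_lim u).
Proof. intros [l H]. now rewrite (seq_lim_eq _ _ H). Qed.

Lemma ex_lim_seq_incr_bounded (u : nat -> R) (M : R) :
  (forall n, u n <= u (S n)) -> (forall n, u n <= M) -> exists l : R, is_lim_seq u l.
Proof. intros Hi Hb. destruct (ex_finite_lim_seq_incr u M Hi Hb) as [l Hl]. now exists l. Qed.

Lemma incr_seq_le (u : nat -> R) :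
  (forall n, u n <= u (S n)) -> forall n m, (n <= m)%nat -> u n <= u m.
Proof. intros Hi n m Hnm. induction Hnm as [|m _ IH]; [lra|]. specialize (Hi m). lra. Qed.

Lemma is_lim_seq_incr_le (u : nat -> R) (l : R) :
  (forall n, u n <= u (S n)) -> is_lim_seq u l -> forall n, u n <= l.
Proof.
  intros Hinc Hl n.
  assert (Hm : forall k, u n <= u (k + n)%nat) by (intros; apply incr_seq_le; [exact Hinc|lia]).
  apply is_lim_seq_incr_n with (N := n) in Hl.
  exact (is_lim_seq_le (fun _ => u n) _ (u n) l Hm (is_lim_seq_const _) Hl).
Qed.

Lemma is_lim_seq_le_ev (u v : nat -> R) (l m : R) N :
  (forall n, (N <= n)%nat -> u n <= v n) -> is_lim_seq u l -> is_lim_seq v m -> l <= m.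
Proof.
  intros Huv Hu Hv. apply is_lim_seq_incr_n with (N := N) in Hu, Hv.
  exact (is_lim_seq_le _ _ l m (fun n => Huv (n + N)%nat ltac:(lia)) Hu Hv).
Qed.

Lemma is_lim_seq_psum (g : nat -> nat -> R) (G : nat -> R) M :
  (forall i, is_lim_seq (fun T => g T i) (G i)) ->
  is_lim_seq (fun T => psum (g T) M) (psum G M).
Proof.
  intros H. induction M as [|M IH]; simpl.
  - apply is_lim_seq_const.
  - now apply is_lim_seq_plus'.
Qed.

Lemma is_lim_seq_sum_f_R0 (F : nat -> nat -> R) (L : nat -> R) n :
  (forall a, (a <= n)%nat -> is_lim_seq (F a) (L a)) ->
  is_lim_seq (fun N => sum_f_R0 (fun a => F a N) n) (sum_f_R0 L n).
Proof.
  induction n as [|n IH]; intros H; simpl; [apply H; lia|].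
  apply is_lim_seq_plus'; [apply IH; intros; apply H; lia|apply H; lia].
Qed.

Lemma is_lim_seq_sub_shift (v : nat -> R) (l : R) c :
  is_lim_seq v l -> is_lim_seq (fun T => v (T - c)%nat) l.
Proof.
  intros H. apply is_lim_seq_incr_n with (N := c).
  apply is_lim_seq_ext with v; [|exact H]. intros n. f_equal. lia.
Qed.

Lemma is_lim_seq_double (u : nat -> R) (l : R) :
  is_lim_seq u l -> is_lim_seq (fun T => u (2 * T)%nat) l.
Proof.
  intros H. apply (is_lim_seq_subseq u l (fun T => (2 * T)%nat)); [|exact H].
  apply eventually_subseq. intros; lia.
Qed.

Lemma is_lim_seq_incr_of_double (u : nat -> R) (l : R) :
  (forall n, u n <= u (S n)) -> is_lim_seq (fun T => u (2 * T)%nat) l -> is_lim_seq u l.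
Proof.
  intros Hi Hl. pose proof (incr_seq_le u Hi) as Hm.
  assert (Hb : forall n, u n <= l).
  { intros n. assert (u (2 * n)%nat <= l).
    { apply (is_lim_seq_incr_le (fun T => u (2 * T)%nat)); [|exact Hl].
      intros; apply Hm; lia. }
    assert (u n <= u (2 * n)%nat) by (apply Hm; lia). lra. }
  destruct (ex_lim_seq_incr_bounded u l Hi Hb) as [l' Hl'].
  replace l with l'; [exact Hl'|].
  apply is_lim_seq_double, is_lim_seq_unique in Hl'.
  rewrite (is_lim_seq_unique _ _ Hl) in Hl'. congruence.
Qed.

(* Monotone convergence for the diagonal sums [sum_{i<T} g T i]. *)
Lemma is_lim_seq_psum_diag (g : nat -> nat -> R) (G : nat -> R) (L : R) :
  (forall T i, 0 <= g T i) ->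
  (forall T i, g T i <= g (S T) i) ->
  (forall i, is_lim_seq (fun T => g T i) (G i)) ->
  is_lim_seq (psum G) L ->
  is_lim_seq (fun T => psum (g T) T) L.
Proof.
  intros Hg0 Hgi HG HL.
  assert (HgG : forall T i, g T i <= G i).
  { intros T i. now apply (is_lim_seq_incr_le (fun T => g T i)). }
  assert (HGi : forall n, psum G n <= psum G (S n)).
  { intros n. rewrite psum_recr.
    enough (0 <= G n) by lra. apply (is_lim_seq_le_ev (fun _ => 0) (fun T => g T n) 0 _ 0).
    - intros; apply Hg0.
    - apply is_lim_seq_const.
    - apply HG. }
  set (s := fun T => psum (g T) T).
  assert (Hsi : forall T, s T <= s (S T)).
  { intros T. unfold s. rewrite psum_recr.
    assert (psum (g T) T <= psum (g (S T)) T) by (apply psum_le; intros; apply Hgi).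
    specialize (Hg0 (S T) T). lra. }
  assert (HsG : forall T, s T <= psum G T) by (intros; apply psum_le; intros; apply HgG).
  assert (HsL : forall T, s T <= L).
  { intros T. specialize (HsG T). pose proof (is_lim_seq_incr_le _ _ HGi HL T). lra. }
  destruct (ex_lim_seq_incr_bounded s L Hsi HsL) as [l Hl].
  replace L with l; [exact Hl|].
  apply Rle_antisym.
  - exact (is_lim_seq_le_ev s (psum G) l L 0 (fun T _ => HsG T) Hl HL).
  - apply (is_lim_seq_le_ev (psum G) (fun _ => l) L l 0); [|exact HL|apply is_lim_seq_const].
    intros M _.
    apply (is_lim_seq_le_ev (fun T => psum (g T) M) s (psum G M) l M);
      [|apply is_lim_seq_psum; exact HG|exact Hl].
    intros n Hn. apply psum_le_len; auto.
Qed.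

(** * Odd harmonic numbers *)

Definition odd_harmonic (n : nat) : R := psum (fun t => / (2 * INR t + 1)) n.

Lemma odd_pos t : 0 < 2 * INR t + 1.
Proof. pose proof (pos_INR t). lra. Qed.

Lemma INR_odd t : INR (S (2 * t)) = 2 * INR t + 1.
Proof. rewrite S_INR, mult_INR. simpl. ring. Qed.

Lemma INR_even t : INR (S (S (2 * t))) = 2 * INR t + 2.
Proof. rewrite S_INR, INR_odd. ring. Qed.

Lemma odd_harmonic_S n : odd_harmonic (S n) = odd_harmonic n + / (2 * INR n + 1).
Proof. reflexivity. Qed.

Lemma odd_harmonic_le n m : (n <= m)%nat -> odd_harmonic n <= odd_harmonic m.
Proof.
  intros. apply psum_le_len; [|assumption].
  intros. left. apply Rinv_0_lt_compat, odd_pos.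
Qed.

Lemma odd_harmonic_nonneg n : 0 <= odd_harmonic n.
Proof. apply (odd_harmonic_le 0); lia. Qed.

Lemma odd_harmonic_ge1 n : 1 <= odd_harmonic (S n).
Proof.
  assert (H : odd_harmonic 1 <= odd_harmonic (S n)) by (apply odd_harmonic_le; lia).
  unfold odd_harmonic at 1 in H. simpl in H.
  replace (/ (2 * 0 + 1)) with 1 in H by (field; lra). lra.
Qed.

Lemma is_lim_seq_inv_odd : is_lim_seq (fun T => / (2 * INR T + 1)) 0.
Proof.
  assert (H : is_lim_seq (fun T => 2 * INR T + 1) p_infty).
  { apply is_lim_seq_plus with (l1 := p_infty) (l2 := 1).
    - pose proof (is_lim_seq_scal_l _ 2 _ is_lim_seq_INR) as HI.
      replace (Rbar_mult 2 p_infty) with p_infty in HI; [exact HI|].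
      simpl. destruct (Rle_dec 0 2) as [r|]; [|lra].
      destruct (Rle_lt_or_eq_dec 0 2 r); [reflexivity|lra].
    - apply is_lim_seq_const.
    - constructor. }
  apply is_lim_seq_inv in H; [exact H|discriminate].
Qed.

Lemma odd_harmonic_tail_bound T r :
  0 <= odd_harmonic (T + r) - odd_harmonic T <= INR r / (2 * INR T + 1).
Proof.
  unfold odd_harmonic. rewrite psum_split.
  assert (Hlow : 0 <= psum (fun k => / (2 * INR (T + k) + 1)) r)
    by (apply psum_nonneg; intros; left; apply Rinv_0_lt_compat, odd_pos).
  assert (Hup : psum (fun k => / (2 * INR (T + k) + 1)) r <= psum (fun _ => / (2 * INR T + 1)) r).
  { apply psum_le. intros k _. apply Rinv_le_contravar; [apply odd_pos|].
    rewrite plus_INR. pose proof (pos_INR k). lra. }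
  rewrite psum_const in Hup. unfold Rdiv. lra.
Qed.

Lemma is_lim_seq_odd_harmonic_tail r :
  is_lim_seq (fun T => odd_harmonic (T + r) - odd_harmonic T) 0.
Proof.
  apply is_lim_seq_le_le with (u := fun _ => 0) (w := fun T => INR r * / (2 * INR T + 1)).
  - intros. apply odd_harmonic_tail_bound.
  - apply is_lim_seq_const.
  - replace (Finite 0) with (Rbar_mult (INR r) 0) by (simpl; f_equal; ring).
    apply is_lim_seq_scal_l, is_lim_seq_inv_odd.
Qed.

(* Cesaro: [odd_harmonic n / n] is an average of the null sequence [/ (2t+1)]. *)
Lemma is_lim_seq_odd_harmonic_div : is_lim_seq (fun T => odd_harmonic T / (2 * INR T + 1)) 0.
Proof.
  assert (C : is_lim_seq (fun n => odd_harmonic n / INR n) 0).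
  { apply is_lim_seq_ext
      with (fun n => sum_f_R0 (fun t => / (2 * INR t + 1)) (Init.Nat.pred n) / INR n).
    - intros [|n]; [simpl; unfold Rdiv; rewrite Rinv_0; ring|].
      simpl Init.Nat.pred. now rewrite sum_f_R0_psum.
    - apply is_lim_seq_Reals, Cesaro_1, is_lim_seq_Reals, is_lim_seq_inv_odd. }
  apply is_lim_seq_le_le with (u := fun _ => 0) (w := fun n => odd_harmonic n / INR n);
    [|apply is_lim_seq_const|exact C].
  intros [|n]; [unfold odd_harmonic, Rdiv; simpl; rewrite Rinv_0; lra|].
  pose proof (odd_harmonic_nonneg (S n)). rewrite S_INR. pose proof (pos_INR n).
  split; [apply Rdiv_le_0_compat; lra|].
  apply Rmult_le_compat_l; [assumption|]. apply Rinv_le_contravar; lra.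
Qed.

Lemma is_lim_seq_odd_harmonic_mul (c : nat -> R) :
  (forall J, 0 <= c J <= / (2 * INR J + 1)) -> is_lim_seq (fun J => odd_harmonic J * c J) 0.
Proof.
  intros Hc.
  apply is_lim_seq_le_le with (u := fun _ => 0) (w := fun J => odd_harmonic J / (2 * INR J + 1));
    [|apply is_lim_seq_const|apply is_lim_seq_odd_harmonic_div].
  intros J. pose proof (odd_harmonic_nonneg J). specialize (Hc J).
  split; [nra|]. apply Rmult_le_compat_l; lra.
Qed.

Definition gap_sum (r T : nat) : R :=
  psum (fun k => / ((2 * INR k + 1) * (2 * INR k + 1 + 2 * INR r))) T.

Lemma gap_sum_pos r k : 0 < / ((2 * INR k + 1) * (2 * INR k + 1 + 2 * INR r)).
Proof.
  apply Rinv_0_lt_compat. pose proof (odd_pos k). pose proof (pos_INR r).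
  apply Rmult_lt_0_compat; lra.
Qed.

Lemma gap_sum_nonneg r T : 0 <= gap_sum r T.
Proof. apply psum_nonneg. intros. left. apply gap_sum_pos. Qed.

Lemma gap_sum_le r T T' : (T <= T')%nat -> gap_sum r T <= gap_sum r T'.
Proof. apply psum_le_len. intros. left. apply gap_sum_pos. Qed.

Lemma gap_sum_telescope r T :
  gap_sum (S r) T =
  (odd_harmonic (S r) - (odd_harmonic (T + S r) - odd_harmonic T)) / (2 * INR (S r)).
Proof.
  assert (Hr : 0 < INR (S r)) by (apply lt_0_INR; lia).
  unfold gap_sum.
  rewrite (psum_ext _ (fun t => / (2 * INR (S r)) *
             (/ (2 * INR t + 1) - / (2 * INR (S r + t) + 1)))).
  2:{ intros t _. rewrite plus_INR. pose proof (pos_INR t). field. split; lra. }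
  rewrite psum_scal_l, psum_minus.
  replace (psum (fun k => / (2 * INR (S r + k) + 1)) T)
    with (odd_harmonic (S r + T) - odd_harmonic (S r)) by (unfold odd_harmonic; rewrite psum_split; ring).
  rewrite Nat.add_comm. fold (odd_harmonic T). field. lra.
Qed.

Lemma is_lim_seq_gap_sum r :
  is_lim_seq (gap_sum (S r)) (odd_harmonic (S r) / (2 * INR (S r))).
Proof.
  apply is_lim_seq_ext with (1 := fun T => eq_sym (gap_sum_telescope r T)).
  replace (odd_harmonic (S r) / (2 * INR (S r)))
    with ((odd_harmonic (S r) - 0) * / (2 * INR (S r))) by (unfold Rdiv; ring).
  apply is_lim_seq_scal_r with (lu := odd_harmonic (S r) - 0).
  apply is_lim_seq_minus'; [apply is_lim_seq_const|apply is_lim_seq_odd_harmonic_tail].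
Qed.

Lemma psum_by_parts (a : nat -> R) J :
  psum (fun j => odd_harmonic (S j) * (a j - a (S j))) J =
  psum (fun j => a j / (2 * INR j + 1)) J - odd_harmonic J * a J.
Proof.
  induction J as [|J IH]; [unfold odd_harmonic; simpl; ring|].
  rewrite !psum_recr, IH, odd_harmonic_S. field. apply Rgt_not_eq, odd_pos.
Qed.

Definition majorant (t : nat) : R := odd_harmonic (S t) ^ 2 / (2 * INR t + 1) ^ 2.

Lemma majorant_le_potential_drop t :
  let h := odd_harmonic (S t) in
  majorant t <=
  2 * (h ^ 2 + h + 1) / (2 * INR t + 1)
  - 2 * (odd_harmonic (S (S t)) ^ 2 + odd_harmonic (S (S t)) + 1) / (2 * INR (S t) + 1).
Proof.
  intros h. unfold majorant. rewrite (odd_harmonic_S (S t)). fold h.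
  assert (Hh : 1 <= h) by apply odd_harmonic_ge1.
  set (a := 2 * INR t + 1). assert (Ha : 1 <= a) by (unfold a; pose proof (pos_INR t); lra).
  replace (2 * INR (S t) + 1) with (a + 2) by (unfold a; rewrite S_INR; ring).
  set (y := / (a + 2)). assert (Hy : y * (a + 2) = 1) by (unfold y; field; lra).
  assert (Hy0 : 0 < y) by (unfold y; apply Rinv_0_lt_compat; lra).
  assert (Hy1 : y <= 1) by (unfold y; rewrite <- Rinv_1; apply Rinv_le_contravar; lra).
  assert (Key : 0 <= 4 * a * (h^2 + h + 1) - 2 * a^2 * y * (2*h + y + 1) - (a+2) * h^2).
  { assert (Hay : a * y <= 1) by (replace (a * y) with (1 - 2 * y) by (rewrite <- Hy; ring); lra).
    assert (a ^ 2 * y * (2 * h + y + 1) <= a * (2 * h + 2)).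
    { apply Rle_trans with (a * (2 * h + y + 1)); [|apply Rmult_le_compat_l; lra].
      apply Rmult_le_compat_r; [lra|]. replace (a ^ 2 * y) with (a * (a * y)) by ring. nra. }
    nra. }
  replace (2 * ((h + y) ^ 2 + (h + y) + 1) / (a + 2)) with (2 * ((h + y) ^ 2 + (h + y) + 1) * y)
    by (unfold y; field; lra).
  apply Rminus_le.
  replace (h ^ 2 / a ^ 2 - (2 * (h ^ 2 + h + 1) / a - 2 * ((h + y) ^ 2 + (h + y) + 1) * y))
    with (- ((4 * a * (h^2 + h + 1) - 2 * a^2 * y * (2*h + y + 1) - (a+2) * h^2) * y / a ^ 2))
    by (unfold y; field; lra).
  enough (0 <= (4 * a * (h^2 + h + 1) - 2 * a^2 * y * (2*h + y + 1) - (a+2) * h^2) * y / a ^ 2)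
    by lra.
  apply Rdiv_le_0_compat; [apply Rmult_le_pos; lra|nra].
Qed.

Lemma psum_majorant_le T : psum majorant T <= 6.
Proof.
  set (Q := fun t => 2 * (odd_harmonic (S t) ^ 2 + odd_harmonic (S t) + 1) / (2 * INR t + 1)).
  assert (HQ : forall T, psum majorant T <= Q O - Q T).
  { induction T0 as [|T0 IH]; [simpl; lra|].
    rewrite psum_recr. pose proof (majorant_le_potential_drop T0) as H. cbv zeta in H.
    unfold Q in *. lra. }
  assert (0 <= Q T).
  { apply Rdiv_le_0_compat; [|apply odd_pos]. pose proof (odd_harmonic_nonneg (S T)). nra. }
  assert (Q O = 6) by (unfold Q, odd_harmonic; simpl; field).
  specialize (HQ T). lra.
Qed.

Lemma ex_lim_psum_majorized (f : nat -> R) (C : R) :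
  (forall t, 0 <= f t) -> (forall t, f t <= C * majorant t) ->
  exists l : R, is_lim_seq (psum f) l.
Proof.
  intros Hf0 HfC. apply (ex_lim_seq_incr_bounded _ (Rabs C * 6)).
  - intros n. rewrite psum_recr. specialize (Hf0 n). lra.
  - intros n. apply Rle_trans with (psum (fun t => Rabs C * majorant t) n).
    + apply psum_le. intros t _. eapply Rle_trans; [apply HfC|].
      apply Rmult_le_compat_r; [|apply Rle_abs].
      apply Rdiv_le_0_compat; [apply pow2_ge_0|apply pow_lt, odd_pos].
    + rewrite psum_scal_l. apply Rmult_le_compat_l; [apply Rabs_pos|apply psum_majorant_le].
Qed.

(** * Odd zeta values and the inner sums [delta_sum] *)

Definition odd_zeta (s T : nat) : R := psum (fun t => / (2 * INR t + 1) ^ s) T.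

Lemma inv_pow_le_inv_sq x n : 1 <= x -> (2 <= n)%nat -> / x ^ n <= / x ^ 2.
Proof. intros. apply Rinv_le_contravar; [apply pow_lt; lra|apply Rle_pow; assumption]. Qed.

Lemma inv_odd_sq_le_majorant t : / (2 * INR t + 1) ^ 2 <= majorant t.
Proof.
  pose proof (odd_harmonic_ge1 t). pose proof (odd_pos t).
  unfold majorant, Rdiv. rewrite <- (Rmult_1_l (/ (2 * INR t + 1) ^ 2)) at 1.
  apply Rmult_le_compat_r; [left; apply Rinv_0_lt_compat, pow_lt; lra|nra].
Qed.

Lemma ex_lim_odd_zeta s : (2 <= s)%nat -> exists l : R, is_lim_seq (odd_zeta s) l.
Proof.
  intros Hs. apply (ex_lim_psum_majorized _ 1).
  - intros t. left. apply Rinv_0_lt_compat, pow_lt, odd_pos.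
  - intros t. rewrite Rmult_1_l. eapply Rle_trans; [|apply inv_odd_sq_le_majorant].
    apply inv_pow_le_inv_sq; [pose proof (pos_INR t); lra|assumption].
Qed.

Definition odd_zeta2 : R := seq_lim (odd_zeta 2).

Lemma is_lim_odd_zeta2 : is_lim_seq (odd_zeta 2) odd_zeta2.
Proof. apply is_lim_seq_lim, ex_lim_odd_zeta. lia. Qed.

(* [pair_sum_eo s] is the sum of 1/(m2 m3) over even m2 > odd m3 with m2 < 2s+1. *)
Definition pair_sum_eo (s : nat) : R := psum (fun t => odd_harmonic (S t) / (2 * INR t + 2)) s.

Definition delta_sum (s J : nat) : R :=
  psum (fun j => odd_harmonic (S j) * (/ (2 * INR j + 2) - / (2 * INR j + 2 + (2 * INR s + 1)))) J.

Definition odd_step_sum (J : nat) : R :=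
  psum (fun j => odd_harmonic (S j) * (/ (2 * INR j + 1) - / (2 * INR j + 2))) J.

Lemma delta_term_nonneg s j :
  0 <= odd_harmonic (S j) * (/ (2 * INR j + 2) - / (2 * INR j + 2 + (2 * INR s + 1))).
Proof.
  pose proof (odd_harmonic_nonneg (S j)). pose proof (odd_pos j). pose proof (odd_pos s).
  apply Rmult_le_pos; [assumption|].
  enough (/ (2 * INR j + 2 + (2 * INR s + 1)) <= / (2 * INR j + 2)) by lra.
  apply Rinv_le_contravar; lra.
Qed.

Lemma delta_sum_nonneg s J : 0 <= delta_sum s J.
Proof. apply psum_nonneg. intros. apply delta_term_nonneg. Qed.

Lemma delta_sum_le s J J' : (J <= J')%nat -> delta_sum s J <= delta_sum s J'.
Proof. apply psum_le_len. intros. apply delta_term_nonneg. Qed.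

Lemma odd_step_sum_add_delta_sum0 J :
  odd_step_sum J + delta_sum 0 J = odd_zeta 2 J - odd_harmonic J / (2 * INR J + 1).
Proof.
  unfold odd_step_sum, delta_sum. rewrite <- psum_plus.
  rewrite (psum_ext _ (fun j => odd_harmonic (S j) *
             ((fun j => / (2 * INR j + 1)) j - (fun j => / (2 * INR j + 1)) (S j)))).
  2:{ intros j _. rewrite S_INR. simpl. ring_simplify.
      replace (2 * INR j + 2 + (2 * 0 + 1)) with (2 * (INR j + 1) + 1) by ring. ring. }
  rewrite psum_by_parts. unfold Rdiv at 2. f_equal.
  apply psum_ext. intros j _. pose proof (odd_pos j). field. lra.
Qed.

Lemma odd_harmonic_div_even_sym j : odd_harmonic (S j) / (2 * INR j + 2) =
  / 2 * psum (fun i => / ((2 * INR i + 1) * (2 * INR (j - i) + 1))) (S j).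
Proof.
  rewrite (psum_ext _ (fun i => / (2 * INR j + 2) * (/ (2 * INR i + 1) + / (2 * INR (j - i) + 1)))).
  2:{ intros i Hi. rewrite minus_INR by lia.
      pose proof (odd_pos i). assert (INR i <= INR j) by (apply le_INR; lia).
      field. repeat split; lra. }
  rewrite psum_scal_l, psum_plus.
  replace (psum (fun i => / (2 * INR (j - i) + 1)) (S j)) with (odd_harmonic (S j)).
  2:{ unfold odd_harmonic. rewrite <- psum_rev. apply psum_ext. intros i Hi.
      now replace (S j - S i)%nat with (j - i)%nat by lia. }
  fold (odd_harmonic (S j)). pose proof (odd_pos j). field. lra.
Qed.

(* Symmetrising [odd_harmonic (S j) / (2j+2)] and exchanging the two summations. *)
Lemma delta_sum0_swap J : delta_sum 0 J =
  / 2 * psum (fun i => / (2 * INR i + 1) * gap_sum (S i) (J - i)) J.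
Proof.
  unfold delta_sum.
  rewrite (psum_ext _ (fun a => psum (fun b => / 2 * (/ (2 * INR a + 3) *
             / ((2 * INR b + 1) * (2 * INR (a - b) + 1)))) (S a))).
  2:{ intros j _. rewrite psum_scal_l, <- psum_scal_l.
      replace (odd_harmonic (S j) * (/ (2 * INR j + 2) - / (2 * INR j + 2 + (2 * INR 0 + 1))))
        with (/ (2 * INR j + 3) * (odd_harmonic (S j) / (2 * INR j + 2)))
        by (simpl; pose proof (odd_pos j); field; lra).
      rewrite odd_harmonic_div_even_sym, psum_scal_l, psum_scal_l. ring. }
  rewrite psum_triangle, <- psum_scal_l. apply psum_ext. intros b Hb.
  unfold gap_sum. rewrite <- !psum_scal_l. apply psum_ext. intros k Hk.
  replace (b + k - b)%nat with k by lia. rewrite plus_INR, S_INR.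
  pose proof (odd_pos b). pose proof (odd_pos k). field. lra.
Qed.

Lemma ex_lim_odd_step_sum : exists U : R, is_lim_seq odd_step_sum U.
Proof.
  apply (ex_lim_seq_incr_bounded _ 6).
  - intros n. unfold odd_step_sum. rewrite psum_recr.
    pose proof (odd_harmonic_nonneg (S n)). pose proof (odd_pos n).
    enough (0 <= / (2 * INR n + 1) - / (2 * INR n + 2)) by nra.
    enough (/ (2 * INR n + 2) <= / (2 * INR n + 1)) by lra.
    apply Rinv_le_contravar; lra.
  - intros n. pose proof (odd_step_sum_add_delta_sum0 n). pose proof (delta_sum_nonneg 0 n).
    assert (odd_zeta 2 n <= 6).
    { eapply Rle_trans; [|apply (psum_majorant_le n)].
      apply psum_le. intros. apply inv_odd_sq_le_majorant. }
    assert (0 <= odd_harmonic n / (2 * INR n + 1))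
      by (apply Rdiv_le_0_compat; [apply odd_harmonic_nonneg|apply odd_pos]).
    lra.
Qed.

Lemma is_lim_delta_sum0_half (U : R) :
  is_lim_seq odd_step_sum U -> is_lim_seq (delta_sum 0) (/ 2 * U).
Proof.
  intros HU.
  apply is_lim_seq_ext with (1 := fun J => eq_sym (delta_sum0_swap J)).
  apply is_lim_seq_scal_l with (lu := U).
  apply is_lim_seq_psum_diag with
      (G := fun i => / (2 * INR i + 1) * (odd_harmonic (S i) / (2 * INR (S i)))).
  - intros T i. apply Rmult_le_pos; [left; apply Rinv_0_lt_compat, odd_pos|apply gap_sum_nonneg].
  - intros T i. apply Rmult_le_compat_l; [left; apply Rinv_0_lt_compat, odd_pos|].
    apply gap_sum_le. lia.
  - intros i. apply is_lim_seq_scal_l with (lu := odd_harmonic (S i) / (2 * INR (S i))).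
    apply is_lim_seq_sub_shift, is_lim_seq_gap_sum.
  - apply is_lim_seq_ext with odd_step_sum; [|exact HU].
    intros T. apply psum_ext. intros i _. rewrite S_INR. pose proof (odd_pos i). field. lra.
Qed.

(* [odd_step_sum + delta_sum 0] tends to [odd_zeta2] while [delta_sum 0] tends to half the
   limit of [odd_step_sum]. *)
Lemma is_lim_delta_sum0 : is_lim_seq (delta_sum 0) (odd_zeta2 / 3).
Proof.
  destruct ex_lim_odd_step_sum as [U HU].
  assert (Hsum : is_lim_seq (delta_sum 0) (odd_zeta2 - 0 - U)).
  { apply is_lim_seq_ext with (fun J => odd_zeta 2 J - odd_harmonic J / (2 * INR J + 1) - odd_step_sum J).
    { intros J. pose proof (odd_step_sum_add_delta_sum0 J). lra. }
    apply is_lim_seq_minus'; [apply is_lim_seq_minus'|exact HU].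
    - apply is_lim_odd_zeta2.
    - apply is_lim_seq_odd_harmonic_div. }
  pose proof (is_lim_delta_sum0_half U HU) as Hhalf.
  assert (E : odd_zeta2 - 0 - U = / 2 * U).
  { apply is_lim_seq_unique in Hsum, Hhalf. rewrite Hhalf in Hsum. now injection Hsum. }
  replace (odd_zeta2 / 3) with (/ 2 * U) by lra. exact Hhalf.
Qed.

Lemma is_lim_delta_sum_S s :
  is_lim_seq (fun J => delta_sum (S s) J - delta_sum s J) (odd_harmonic (S s) / (2 * INR (S s))).
Proof.
  set (a := fun j => / (2 * INR j + 2 + (2 * INR s + 1))).
  apply is_lim_seq_ext with (fun J => gap_sum (S s) J - odd_harmonic J * a J).
  { intros J. unfold delta_sum. rewrite <- psum_minus.
    rewrite (psum_ext _ (fun j => odd_harmonic (S j) * (a j - a (S j)))).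
    2:{ intros j _. unfold a. rewrite !S_INR.
        pose proof (odd_pos j). pose proof (pos_INR s). field. lra. }
    rewrite psum_by_parts. f_equal. apply psum_ext. intros j _. unfold a. rewrite S_INR.
    pose proof (odd_pos j). pose proof (pos_INR s). field. lra. }
  replace (odd_harmonic (S s) / (2 * INR (S s)))
    with (odd_harmonic (S s) / (2 * INR (S s)) - 0) by ring.
  apply is_lim_seq_minus'; [apply is_lim_seq_gap_sum|].
  apply is_lim_seq_odd_harmonic_mul. intros J. unfold a.
  pose proof (odd_pos J). pose proof (pos_INR s).
  split; [left; apply Rinv_0_lt_compat; lra|apply Rinv_le_contravar; lra].
Qed.

Lemma is_lim_delta_sum s : is_lim_seq (delta_sum s) (pair_sum_eo s + odd_zeta2 / 3).
Proof.
  induction s as [|s IH].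
  - replace (pair_sum_eo 0 + odd_zeta2 / 3) with (odd_zeta2 / 3) by (unfold pair_sum_eo; simpl; ring).
    apply is_lim_delta_sum0.
  - apply is_lim_seq_ext with (fun J => delta_sum s J + (delta_sum (S s) J - delta_sum s J));
      [intros; ring|].
    replace (pair_sum_eo (S s) + odd_zeta2 / 3)
      with ((pair_sum_eo s + odd_zeta2 / 3) + odd_harmonic (S s) / (2 * INR (S s))).
    2:{ unfold pair_sum_eo. rewrite psum_recr, (S_INR s). field. pose proof (pos_INR s). lra. }
    apply is_lim_seq_plus'; [exact IH|apply is_lim_delta_sum_S].
Qed.

(** * Compositions of the weight and partial fractions *)

Lemma sum_compositions_last (F : nat -> R) w a b : (a <= w)%nat -> (b <= w)%nat ->
  sum_f_R0 (fun c =>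
    if (Nat.eqb (a + b + c) w && Nat.leb 2 a && Nat.leb 1 b && Nat.leb 1 c)%bool
    then F c else 0) w
  = if (Nat.leb 2 a && Nat.leb 1 b && Nat.leb (a + b + 1) w)%bool then F (w - a - b)%nat else 0.
Proof.
  intros Ha Hb. rewrite sum_f_R0_psum.
  destruct (Nat.leb_spec0 2 a), (Nat.leb_spec0 1 b), (Nat.leb_spec0 (a + b + 1) w); cbv [andb];
    try (apply psum_eq0; intros c Hc;
         destruct (Nat.eqb_spec (a + b + c) w), (Nat.leb_spec0 1 c); reflexivity || (exfalso; lia)).
  rewrite (psum_single _ _ (w - a - b)) by
    (lia || (intros c Hc Hne; destruct (Nat.eqb_spec (a + b + c) w); [lia|reflexivity])).
  destruct (Nat.eqb_spec (a + b + (w - a - b)) w), (Nat.leb_spec0 1 (w - a - b));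
    [reflexivity|exfalso; lia..].
Qed.

Lemma sum_compositions_middle (G : nat -> R) w a : (a <= w)%nat ->
  sum_f_R0 (fun b =>
    if (Nat.leb 2 a && Nat.leb 1 b && Nat.leb (a + b + 1) w)%bool then G b else 0) w
  = if (Nat.leb 2 a && Nat.leb a (w - 2))%bool
    then psum (fun j => G (1 + j)%nat) (S (w - a - 2)) else 0.
Proof.
  intros Ha. rewrite sum_f_R0_psum.
  destruct (Nat.leb_spec0 2 a), (Nat.leb_spec0 a (w - 2)); cbv [andb].
  - rewrite (psum_ext _ (fun b => if (Nat.leb 1 b && Nat.leb b (w - a - 1))%bool then G b else 0)).
    + rewrite psum_window by lia. now replace (w - a - 1 - 1)%nat with (w - a - 2)%nat by lia.
    + intros b Hb. destruct (Nat.leb_spec0 1 b), (Nat.leb_spec0 (a + b + 1) w),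
        (Nat.leb_spec0 b (w - a - 1)); cbv [andb]; reflexivity || (exfalso; lia).
  - apply psum_eq0. intros b Hb.
    destruct (Nat.leb_spec0 1 b), (Nat.leb_spec0 (a + b + 1) w); cbv [andb];
      reflexivity || (exfalso; lia).
  - apply psum_eq0. reflexivity.
  - apply psum_eq0. reflexivity.
Qed.

Lemma sum_compositions (F : nat -> nat -> nat -> R) w : (4 <= w)%nat ->
  sum_f_R0 (fun a => sum_f_R0 (fun b => sum_f_R0 (fun c =>
    if (Nat.eqb (a + b + c) w && Nat.leb 2 a && Nat.leb 1 b && Nat.leb 1 c)%bool
    then F a b c else 0) w) w) w
  = psum (fun i => psum (fun j => F (2 + i)%nat (1 + j)%nat (w - 3 - i - j)%nat)
                        (S (w - 4 - i))) (S (w - 4)).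
Proof.
  intros Hw.
  rewrite (sum_eq _ (fun a => if (Nat.leb 2 a && Nat.leb a (w - 2))%bool
    then psum (fun j => F a (1 + j)%nat (w - a - (1 + j))%nat) (S (w - a - 2)) else 0)).
  2:{ intros a Ha. rewrite <- (sum_compositions_middle (fun b => F a b (w - a - b)%nat)) by lia.
      apply sum_eq. intros b Hb. apply sum_compositions_last; lia. }
  rewrite sum_f_R0_psum, psum_window; [|lia|lia].
  replace (w - 2 - 2)%nat with (w - 4)%nat by lia.
  apply psum_ext. intros i Hi. replace (w - (2 + i) - 2)%nat with (w - 4 - i)%nat by lia.
  apply psum_ext. intros j Hj. f_equal. lia.
Qed.

Definition hom2 (Y Z : R) (j : nat) : R := psum (fun b => Y ^ b * Z ^ (j - b)) (S j).
Definition hom3 (X Y Z : R) (k : nat) : R := psum (fun a => X ^ a * hom2 Y Z (k - a)) (S k).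

Lemma hom2_S (Y Z : R) j : hom2 Y Z (S j) = Z ^ S j + Y * hom2 Y Z j.
Proof.
  unfold hom2. rewrite psum_recl, Nat.sub_0_r, <- psum_scal_l. simpl (Y ^ 0).
  f_equal; [ring|]. apply psum_ext. intros b _. simpl. ring.
Qed.

Lemma hom3_S (X Y Z : R) k : hom3 X Y Z (S k) = hom2 Y Z (S k) + X * hom3 X Y Z k.
Proof.
  unfold hom3 at 1. rewrite psum_recl, Nat.sub_0_r. unfold hom3. rewrite <- psum_scal_l.
  f_equal; [simpl; ring|]. apply psum_ext. intros a _. simpl. ring.
Qed.

Lemma hom2_mul_sub (Y Z : R) j : hom2 Y Z j * (Y - Z) = Y ^ S j - Z ^ S j.
Proof.
  induction j as [|j IH]; [unfold hom2; simpl; ring|].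
  rewrite hom2_S.
  replace ((Z ^ S j + Y * hom2 Y Z j) * (Y - Z)) with (Z ^ S j * (Y - Z) + Y * (hom2 Y Z j * (Y - Z)))
    by ring.
  rewrite IH. simpl. ring.
Qed.

Lemma hom3_mul_vandermonde (X Y Z : R) k : hom3 X Y Z k * ((X - Y) * (X - Z) * (Y - Z)) =
  X ^ (k + 2) * (Y - Z) - Y ^ (k + 2) * (X - Z) + Z ^ (k + 2) * (X - Y).
Proof.
  induction k as [|k IH]; [unfold hom3, hom2; simpl; ring|].
  rewrite hom3_S.
  replace ((hom2 Y Z (S k) + X * hom3 X Y Z k) * ((X - Y) * (X - Z) * (Y - Z)))
    with ((hom2 Y Z (S k) * (Y - Z)) * ((X - Y) * (X - Z))
          + X * (hom3 X Y Z k * ((X - Y) * (X - Z) * (Y - Z)))) by ring.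
  rewrite IH, hom2_mul_sub. replace (S k + 2)%nat with (S (k + 2)) by lia.
  replace (S (S k)) with (k + 2)%nat by lia. simpl. ring.
Qed.

Definition pf_top (w : nat) (x1 x2 x3 : R) : R := / (x1 ^ (w - 2) * (x1 - x2) * (x1 - x3)).
Definition pf_mid (w : nat) (x1 x2 x3 : R) : R := / (x2 ^ (w - 3) * (x1 - x2) * (x2 - x3) * x1).
Definition pf_low (w : nat) (x1 x2 x3 : R) : R := / (x3 ^ (w - 3) * (x2 - x3) * (x1 - x3) * x1).

Lemma sum_compositions_inv_monomial w (x1 x2 x3 : R) : (4 <= w)%nat ->
  x1 <> 0 -> x2 <> 0 -> x3 <> 0 -> x1 <> x2 -> x1 <> x3 -> x2 <> x3 ->
  sum_f_R0 (fun a => sum_f_R0 (fun b => sum_f_R0 (fun c =>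
    if (Nat.eqb (a + b + c) w && Nat.leb 2 a && Nat.leb 1 b && Nat.leb 1 c)%bool
    then / (x1 ^ a * x2 ^ b * x3 ^ c) else 0) w) w) w
  = pf_low w x1 x2 x3 - pf_mid w x1 x2 x3 + pf_top w x1 x2 x3.
Proof.
  intros Hw H1 H2 H3 H12 H13 H23.
  set (X := / x1). set (Y := / x2). set (Z := / x3).
  rewrite sum_compositions by assumption.
  transitivity (X ^ 2 * Y * Z * hom3 X Y Z (w - 4)).
  { unfold hom3, hom2. rewrite <- psum_scal_l. apply psum_ext. intros i Hi.
    rewrite <- psum_scal_l, <- psum_scal_l. apply psum_ext. intros j Hj.
    replace (w - 3 - i - j)%nat with (S (w - 4 - i - j)) by lia.
    unfold X, Y, Z. rewrite !Rinv_mult, <- !pow_inv. simpl. ring. }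
  assert (HXY : X - Y <> 0) by (intros E; apply H12, Rinv_eq_reg; unfold X, Y in E; lra).
  assert (HXZ : X - Z <> 0) by (intros E; apply H13, Rinv_eq_reg; unfold X, Z in E; lra).
  assert (HYZ : Y - Z <> 0) by (intros E; apply H23, Rinv_eq_reg; unfold Y, Z in E; lra).
  replace (hom3 X Y Z (w - 4))
    with ((X ^ (w - 2) * (Y - Z) - Y ^ (w - 2) * (X - Z) + Z ^ (w - 2) * (X - Y))
          / ((X - Y) * (X - Z) * (Y - Z))).
  2:{ replace (w - 2)%nat with (w - 4 + 2)%nat by lia. rewrite <- hom3_mul_vandermonde.
      field. repeat split; assumption. }
  unfold pf_low, pf_mid, pf_top, X, Y, Z. rewrite !pow_inv.
  replace (w - 2)%nat with (S (w - 3)) by lia. simpl.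
  assert (x1 ^ (w - 3) <> 0) by (apply pow_nonzero; assumption).
  assert (x2 ^ (w - 3) <> 0) by (apply pow_nonzero; assumption).
  assert (x3 ^ (w - 3) <> 0) by (apply pow_nonzero; assumption).
  field. repeat split; try assumption; intros E;
    first [apply H12; lra | apply H13; lra | apply H23; lra].
Qed.

Definition odd_weighted (s : nat) (f : nat -> R) (T : nat) : R :=
  psum (fun t => f t / (2 * INR t + 1) ^ s) T.

Definition even_weighted (s : nat) (f : nat -> R) (T : nat) : R :=
  psum (fun t => f t / (2 * INR t + 2) ^ s) T.

Lemma ex_lim_odd_weighted s f : (2 <= s)%nat ->
  (forall t, 0 <= f t <= odd_harmonic (S t) ^ 2) ->
  exists l : R, is_lim_seq (odd_weighted s f) l.
Proof.
  intros Hs Hf. apply (ex_lim_psum_majorized _ 1).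
  - intros t. apply Rdiv_le_0_compat; [apply Hf|apply pow_lt, odd_pos].
  - intros t. rewrite Rmult_1_l. unfold majorant, Rdiv. pose proof (pos_INR t).
    apply Rmult_le_compat; [apply Hf|left; apply Rinv_0_lt_compat, pow_lt; lra|apply Hf|].
    apply inv_pow_le_inv_sq; [lra|assumption].
Qed.

Lemma ex_lim_even_weighted s f : (2 <= s)%nat ->
  (forall t, 0 <= f t <= odd_harmonic (S t) ^ 2) ->
  exists l : R, is_lim_seq (even_weighted s f) l.
Proof.
  intros Hs Hf. apply (ex_lim_psum_majorized _ 1).
  - intros t. pose proof (pos_INR t). apply Rdiv_le_0_compat; [apply Hf|apply pow_lt; lra].
  - intros t. rewrite Rmult_1_l. unfold majorant, Rdiv. pose proof (pos_INR t).
    apply Rmult_le_compat; [apply Hf|left; apply Rinv_0_lt_compat, pow_lt; lra|apply Hf|].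
    eapply Rle_trans; [apply inv_pow_le_inv_sq; [lra|assumption]|].
    apply Rinv_le_contravar; [apply pow_lt; lra|apply pow_incr; lra].
Qed.

Lemma odd_harmonic_le_sq t : odd_harmonic (S t) <= odd_harmonic (S t) ^ 2.
Proof. pose proof (odd_harmonic_ge1 t). simpl. nra. Qed.

Lemma odd_zeta_le_odd_harmonic r t : (1 <= r)%nat -> odd_zeta r t <= odd_harmonic t.
Proof.
  intros Hr. apply psum_le. intros k _. pose proof (pos_INR k).
  apply Rinv_le_contravar; [lra|]. rewrite <- (pow_1 (2 * INR k + 1)) at 1.
  apply Rle_pow; [lra|assumption].
Qed.

Lemma odd_zeta_nonneg r t : 0 <= odd_zeta r t.
Proof. apply psum_nonneg. intros. left. apply Rinv_0_lt_compat, pow_lt, odd_pos. Qed.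

Lemma odd_zeta_bounds r t : (1 <= r)%nat -> 0 <= odd_zeta r (S t) <= odd_harmonic (S t) ^ 2.
Proof.
  intros Hr. split; [apply odd_zeta_nonneg|].
  eapply Rle_trans; [apply odd_zeta_le_odd_harmonic, Hr|apply odd_harmonic_le_sq].
Qed.

Lemma pair_sum_eo_bounds t : 0 <= pair_sum_eo t <= odd_harmonic (S t) ^ 2.
Proof.
  split.
  - apply psum_nonneg. intros k _. pose proof (pos_INR k).
    apply Rdiv_le_0_compat; [apply odd_harmonic_nonneg|lra].
  - apply Rle_trans with (psum (fun k => odd_harmonic (S t) * / (2 * INR k + 1)) t).
    + apply psum_le. intros k Hk. pose proof (odd_pos k).
      apply Rmult_le_compat; [apply odd_harmonic_nonneg|left; apply Rinv_0_lt_compat; lra|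
                              apply odd_harmonic_le; lia|apply Rinv_le_contravar; lra].
    + rewrite psum_scal_l. fold (odd_harmonic t).
      pose proof (odd_harmonic_le t (S t) ltac:(lia)). pose proof (odd_harmonic_nonneg t).
      simpl. nra.
Qed.

Lemma nsum_cons f fs N : nsum (f :: fs) N = psum (fun k => f (S k) * nsum fs k) N.
Proof. induction N as [|N IH]; simpl in *; [reflexivity|]. now rewrite IH. Qed.

Lemma nsum_nonneg fs N : List.Forall (fun f => forall m, 0 <= f m) fs -> 0 <= nsum fs N.
Proof.
  revert N. induction fs as [|f fs IH]; intros N H; [simpl; lra|].
  inversion H; subst. rewrite nsum_cons. apply psum_nonneg. intros k _.
  apply Rmult_le_pos; auto.
Qed.

Lemma nsum_le_succ fs N : List.Forall (fun f => forall m, 0 <= f m) fs -> nsum fs N <= nsum fs (S N).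
Proof.
  intros H. destruct fs as [|f fs]; [simpl; lra|].
  inversion H; subst. rewrite !nsum_cons, psum_recr.
  assert (0 <= f (S N) * nsum fs N) by (apply Rmult_le_pos; auto; apply nsum_nonneg; auto).
  lra.
Qed.

Lemma nseries_eq fs (l : R) : is_lim_seq (nsum fs) l -> nseries fs = l.
Proof. apply seq_lim_eq. Qed.

Definition Tfactors (s : list nat) : list (nat -> R) :=
  map (fun i => Tfactor (length s) i (nth i s O)) (seq 0 (length s)).

Lemma Tval_nseries s : Tval s = nseries (Tfactors s).
Proof. reflexivity. Qed.

Lemma Tfactors_nonneg s : List.Forall (fun f => forall m, 0 <= f m) (Tfactors s).
Proof.
  unfold Tfactors. induction (seq 0 (length s)) as [|i l IH]; simpl; constructor; [|exact IH].
  intros m. unfold Tfactor. destruct (Bool.eqb _ _); [|lra].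
  destruct m as [|m]; [|apply Rdiv_le_0_compat; [lra|apply pow_lt, lt_0_INR; lia]].
  simpl INR. destruct (nth i s O); simpl; [lra|].
  rewrite Rmult_0_l. unfold Rdiv. rewrite Rinv_0. lra.
Qed.

Lemma Tfactor_odd d i s t : Nat.even (d - i) = false ->
  Tfactor d i s (S (2 * t)) = 2 / (2 * INR t + 1) ^ s /\ Tfactor d i s (S (S (2 * t))) = 0.
Proof.
  intros E. unfold Tfactor.
  rewrite E, Nat.even_succ_succ, Nat.even_even, Nat.even_succ, Nat.odd_even.
  split; [|reflexivity]. now rewrite INR_odd.
Qed.

Lemma Tfactor_even d i s t : Nat.even (d - i) = true ->
  Tfactor d i s (S (S (2 * t))) = 2 / (2 * INR t + 2) ^ s /\ Tfactor d i s (S (2 * t)) = 0.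
Proof.
  intros E. unfold Tfactor.
  rewrite E, Nat.even_succ_succ, Nat.even_even, Nat.even_succ, Nat.odd_even.
  split; [|reflexivity]. now rewrite INR_even.
Qed.

Lemma nsum_odd f fs T : (forall t, f (S (S (2 * t))) = 0) ->
  nsum (f :: fs) (2 * T) = psum (fun t => f (S (2 * t)) * nsum fs (2 * t)) T.
Proof.
  intros H. rewrite nsum_cons, psum_even_odd. apply psum_ext. intros t _. rewrite H. ring.
Qed.

Lemma nsum_odd_S f fs T : (forall t, f (S (S (2 * t))) = 0) ->
  nsum (f :: fs) (S (2 * T)) = psum (fun t => f (S (2 * t)) * nsum fs (2 * t)) (S T).
Proof. intros H. rewrite nsum_cons, psum_recr, <- nsum_cons, nsum_odd; auto. Qed.

Lemma nsum_even f fs T : (forall t, f (S (2 * t)) = 0) ->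
  nsum (f :: fs) (2 * T) = psum (fun t => f (S (S (2 * t))) * nsum fs (S (2 * t))) T.
Proof.
  intros H. rewrite nsum_cons, psum_even_odd. apply psum_ext. intros t _. rewrite H. ring.
Qed.

Lemma is_lim_nsum_Tfactors_of_double s (l : R) :
  is_lim_seq (fun T => nsum (Tfactors s) (2 * T)) l -> Tval s = l.
Proof.
  intros H. apply nseries_eq, is_lim_seq_incr_of_double; [|exact H].
  intros n. apply nsum_le_succ, Tfactors_nonneg.
Qed.

Lemma Tval_single s : (2 <= s)%nat -> Tval (s :: nil) = 2 * seq_lim (odd_zeta s).
Proof.
  intros Hs. apply is_lim_nsum_Tfactors_of_double.
  apply is_lim_seq_ext with (fun T => 2 * odd_zeta s T).
  - intros T. unfold Tfactors. simpl length. simpl map.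
    rewrite nsum_odd by (intros; apply (Tfactor_odd 1 0); reflexivity).
    unfold odd_zeta. rewrite <- psum_scal_l. apply psum_ext. intros t _.
    rewrite (proj1 (Tfactor_odd 1 0 s t eq_refl)). simpl. unfold Rdiv. ring.
  - apply is_lim_seq_scal_l with (lu := seq_lim (odd_zeta s)).
    apply is_lim_seq_lim, ex_lim_odd_zeta, Hs.
Qed.

Lemma Tval_pair s r : (2 <= s)%nat -> (1 <= r)%nat ->
  Tval (s :: r :: nil) = 4 * seq_lim (even_weighted s (fun t => odd_zeta r (S t))).
Proof.
  intros Hs Hr. apply is_lim_nsum_Tfactors_of_double.
  apply is_lim_seq_ext with (fun T => 4 * even_weighted s (fun t => odd_zeta r (S t)) T).
  - intros T. unfold Tfactors. simpl length. simpl map.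
    rewrite nsum_even by (intros; apply (Tfactor_even 2 0); reflexivity).
    unfold even_weighted. rewrite <- psum_scal_l. apply psum_ext. intros t _.
    rewrite (proj1 (Tfactor_even 2 0 s t eq_refl)).
    rewrite nsum_odd_S by (intros; apply (Tfactor_odd 2 1); reflexivity).
    rewrite (psum_ext _ (fun t0 => 2 * / (2 * INR t0 + 1) ^ r)), psum_scal_l.
    + unfold odd_zeta, Rdiv. ring.
    + intros t0 _. rewrite (proj1 (Tfactor_odd 2 1 r t0 eq_refl)). simpl. unfold Rdiv. ring.
  - apply is_lim_seq_scal_l with (lu := seq_lim (even_weighted s (fun t => odd_zeta r (S t)))).
    apply is_lim_seq_lim, ex_lim_even_weighted; [exact Hs|]. intros t.
    now apply odd_zeta_bounds.
Qed.

(** * Sums over chains [m1 > m2 > m3] of odd, even, odd integers *)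

Definition chain_sum (T : nat) (G : nat -> nat -> nat -> R) : R :=
  psum (fun t1 => psum (fun t2 => psum (fun t3 => G t1 t2 t3) (S t2)) t1) T.

(* [t1 > t2 >= t3] is the chain [2t1+1 > 2t2+2 > 2t3+1]. *)
Definition chain_at (P : R -> R -> R -> R) (T : nat) : R :=
  chain_sum T (fun t1 t2 t3 => P (2 * INR t1 + 1) (2 * INR t2 + 2) (2 * INR t3 + 1)).

Lemma chain_sum_ext T G H :
  (forall t1 t2 t3, (t2 < t1)%nat -> (t3 <= t2)%nat -> G t1 t2 t3 = H t1 t2 t3) ->
  chain_sum T G = chain_sum T H.
Proof.
  intros E. apply psum_ext. intros. apply psum_ext. intros. apply psum_ext. intros.
  apply E; lia.
Qed.

Lemma chain_sum_le T G H :
  (forall t1 t2 t3, (t2 < t1)%nat -> (t3 <= t2)%nat -> G t1 t2 t3 <= H t1 t2 t3) ->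
  chain_sum T G <= chain_sum T H.
Proof.
  intros E. apply psum_le. intros. apply psum_le. intros. apply psum_le. intros.
  apply E; lia.
Qed.

Lemma chain_sum_plus T G H :
  chain_sum T (fun a b c => G a b c + H a b c) = chain_sum T G + chain_sum T H.
Proof.
  unfold chain_sum. rewrite <- psum_plus. apply psum_ext. intros. rewrite <- psum_plus.
  apply psum_ext. intros. apply psum_plus.
Qed.

Lemma chain_sum_minus T G H :
  chain_sum T (fun a b c => G a b c - H a b c) = chain_sum T G - chain_sum T H.
Proof.
  unfold chain_sum. rewrite <- psum_minus. apply psum_ext. intros. rewrite <- psum_minus.
  apply psum_ext. intros. apply psum_minus.
Qed.

Lemma chain_sum_scal_l T c G : chain_sum T (fun a b d => c * G a b d) = c * chain_sum T G.
Proof.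
  unfold chain_sum. rewrite <- psum_scal_l. apply psum_ext. intros. rewrite <- psum_scal_l.
  apply psum_ext. intros. apply psum_scal_l.
Qed.

Lemma sum_f_R0_chain_sum T w (G : nat -> nat -> nat -> nat -> R) :
  sum_f_R0 (fun a => chain_sum T (G a)) w =
  chain_sum T (fun t1 t2 t3 => sum_f_R0 (fun a => G a t1 t2 t3) w).
Proof.
  induction w as [|w IH]; [reflexivity|]. simpl. rewrite IH, <- chain_sum_plus. reflexivity.
Qed.

Lemma if_chain_sum T (b : bool) G :
  (if b then chain_sum T G else 0) = chain_sum T (fun t1 t2 t3 => if b then G t1 t2 t3 else 0).
Proof.
  destruct b; [reflexivity|]. symmetry.
  apply psum_eq0. intros. apply psum_eq0. intros. apply psum_eq0. reflexivity.
Qed.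

Lemma nsum_Tfactors3 a b c T : nsum (Tfactors (a :: b :: c :: nil)) (2 * T) =
  chain_sum T (fun t1 t2 t3 =>
    8 * / ((2 * INR t1 + 1) ^ a * (2 * INR t2 + 2) ^ b * (2 * INR t3 + 1) ^ c)).
Proof.
  unfold Tfactors. simpl length. simpl map.
  rewrite nsum_odd by (intros; apply (Tfactor_odd 3 0); reflexivity).
  apply psum_ext. intros t1 _.
  rewrite nsum_even by (intros; apply (Tfactor_even 3 1); reflexivity).
  rewrite (proj1 (Tfactor_odd 3 0 a t1 eq_refl)), <- psum_scal_l. apply psum_ext. intros t2 _.
  rewrite nsum_odd_S by (intros; apply (Tfactor_odd 3 2); reflexivity).
  rewrite (proj1 (Tfactor_even 3 1 b t2 eq_refl)), <- !psum_scal_l. apply psum_ext. intros t3 _.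
  rewrite (proj1 (Tfactor_odd 3 2 c t3 eq_refl)). simpl. unfold Rdiv. rewrite !Rinv_mult. ring.
Qed.

Lemma chain_sum_le_6 T : chain_sum T (fun t1 t2 t3 =>
  / ((2 * INR t1 + 1) ^ 2 * (2 * INR t2 + 1) * (2 * INR t3 + 1))) <= 6.
Proof.
  eapply Rle_trans; [|apply (psum_majorant_le T)]. apply psum_le. intros t1 _.
  set (c := / (2 * INR t1 + 1) ^ 2).
  assert (Hc : 0 <= c) by (left; apply Rinv_0_lt_compat, pow_lt, odd_pos).
  transitivity (c * psum (fun t2 => / (2 * INR t2 + 1) * odd_harmonic (S t2)) t1).
  { rewrite <- psum_scal_l. right. apply psum_ext. intros t2 _. unfold odd_harmonic.
    rewrite <- !psum_scal_l. apply psum_ext. intros t3 _. unfold c. rewrite !Rinv_mult. ring. }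
  apply Rle_trans with (c * (odd_harmonic t1 * odd_harmonic t1)).
  - apply Rmult_le_compat_l; [exact Hc|].
    replace (odd_harmonic t1 * odd_harmonic t1)
      with (psum (fun t2 => / (2 * INR t2 + 1) * odd_harmonic t1) t1)
      by (rewrite psum_scal_r; reflexivity).
    apply psum_le. intros t2 Ht2.
    apply Rmult_le_compat_l; [left; apply Rinv_0_lt_compat, odd_pos|apply odd_harmonic_le; lia].
  - unfold majorant, c, Rdiv. rewrite (Rmult_comm (odd_harmonic (S t1) ^ 2)).
    apply Rmult_le_compat_l; [exact Hc|].
    pose proof (odd_harmonic_le t1 (S t1) ltac:(lia)). pose proof (odd_harmonic_nonneg t1).
    simpl. nra.
Qed.

Lemma nsum_Tfactors3_le a b c T : (2 <= a)%nat -> (1 <= b)%nat -> (1 <= c)%nat ->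
  nsum (Tfactors (a :: b :: c :: nil)) (2 * T) <= 48.
Proof.
  intros Ha Hb Hc. rewrite nsum_Tfactors3. replace 48 with (8 * 6) by ring.
  eapply Rle_trans; [|apply Rmult_le_compat_l; [lra|apply (chain_sum_le_6 T)]].
  rewrite <- chain_sum_scal_l. apply chain_sum_le. intros t1 t2 t3 _ _.
  apply Rmult_le_compat_l; [lra|].
  pose proof (pos_INR t1). pose proof (pos_INR t2). pose proof (pos_INR t3).
  apply Rinv_le_contravar.
  { repeat apply Rmult_lt_0_compat; try apply pow_lt; lra. }
  repeat apply Rmult_le_compat; try lra; try (apply pow_le; lra);
    try (repeat apply Rmult_le_pos; try apply pow_le; lra).
  - apply Rle_pow; [lra|assumption].
  - apply Rle_trans with (2 * INR t2 + 2); [lra|].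
    rewrite <- (pow_1 (2 * INR t2 + 2)) at 1. apply Rle_pow; [lra|assumption].
  - rewrite <- (pow_1 (2 * INR t3 + 1)) at 1. apply Rle_pow; [lra|assumption].
Qed.

Lemma is_lim_nsum_Tfactors3 a b c : (2 <= a)%nat -> (1 <= b)%nat -> (1 <= c)%nat ->
  is_lim_seq (nsum (Tfactors (a :: b :: c :: nil))) (Tval (a :: b :: c :: nil)).
Proof.
  intros Ha Hb Hc.
  assert (Hinc : forall n, nsum (Tfactors (a :: b :: c :: nil)) n
                           <= nsum (Tfactors (a :: b :: c :: nil)) (S n))
    by (intros; apply nsum_le_succ, Tfactors_nonneg).
  destruct (ex_lim_seq_incr_bounded _ 48 Hinc) as [l Hl].
  - intros n. eapply Rle_trans; [apply (incr_seq_le _ Hinc n (2 * n)); lia|].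
    apply nsum_Tfactors3_le; assumption.
  - rewrite Tval_nseries, (nseries_eq _ l Hl). exact Hl.
Qed.

Lemma pf_top_inner t1 :
  psum (fun t2 => psum (fun t3 =>
    / ((2 * INR t1 + 1 - (2 * INR t2 + 2)) * (2 * INR t1 + 1 - (2 * INR t3 + 1)))) (S t2)) t1
  = pair_sum_eo t1.
Proof.
  unfold pair_sum_eo.
  transitivity (psum (fun c => psum (fun a => / ((2 * INR a + 1) * (2 * INR c + 2))) (S c)) t1).
  2:{ apply psum_ext. intros c _. unfold odd_harmonic, Rdiv. rewrite <- psum_scal_r.
      apply psum_ext. intros a _. apply Rinv_mult. }
  symmetry. rewrite psum_triangle. symmetry. rewrite <- psum_rev. apply psum_ext. intros a Ha. replace (S (t1 - S a)) with (t1 - a)%nat by lia.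
  rewrite <- (psum_rev _ (t1 - a)). apply psum_ext. intros k Hk.
  rewrite !minus_INR by lia. rewrite !S_INR, !plus_INR. f_equal. ring.
Qed.

Lemma chain_at_pf_top w T : chain_at (pf_top w) T = odd_weighted (w - 2) pair_sum_eo T.
Proof.
  apply psum_ext. intros t1 _. rewrite <- pf_top_inner. unfold Rdiv. rewrite <- psum_scal_r.
  apply psum_ext. intros t2 _. rewrite <- psum_scal_r. apply psum_ext. intros t3 _.
  unfold pf_top. rewrite !Rinv_mult. ring.
Qed.

Lemma odd_harmonic_rev t2 :
  psum (fun t3 => / (2 * INR t2 + 2 - (2 * INR t3 + 1))) (S t2) = odd_harmonic (S t2).
Proof.
  unfold odd_harmonic. rewrite <- psum_rev. apply psum_ext. intros k Hk.
  rewrite minus_INR by lia. rewrite !S_INR. f_equal. ring.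
Qed.

Lemma chain_at_pf_mid w T : (3 <= w)%nat -> chain_at (pf_mid w) T =
  psum (fun t2 => odd_harmonic (S t2) / (2 * INR t2 + 2) ^ (w - 3) * gap_sum (S t2) (T - S t2)) T.
Proof.
  intros Hw.
  transitivity (psum (fun t1 => psum (fun t2 => odd_harmonic (S t2) * / ((2 * INR t2 + 2) ^ (w - 3) *
      ((2 * INR t1 + 1) - (2 * INR t2 + 2)) * (2 * INR t1 + 1))) t1) T).
  { apply psum_ext. intros t1 _. apply psum_ext. intros t2 Ht2.
    rewrite <- odd_harmonic_rev, <- psum_scal_r. apply psum_ext. intros t3 Ht3.
    unfold pf_mid. rewrite !Rinv_mult. ring. }
  rewrite psum_triangle_strict. apply psum_ext. intros t2 Ht2.
  unfold gap_sum, Rdiv. rewrite <- psum_scal_l. apply psum_ext. intros k Hk.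
  rewrite plus_INR, !S_INR. pose proof (pos_INR t2). pose proof (pos_INR k).
  assert ((2 * INR t2 + 2) ^ (w - 3) <> 0) by (apply pow_nonzero; lra).
  field. repeat split; lra.
Qed.

Lemma chain_at_pf_low w T : (3 <= w)%nat -> chain_at (pf_low w) T =
  psum (fun t3 => delta_sum t3 (T - S t3) / (2 * INR t3 + 1) ^ (w - 2)) T.
Proof.
  intros Hw.
  transitivity (psum (fun t1 => psum (fun t3 => odd_harmonic (t1 - t3) * / ((2 * INR t3 + 1) ^ (w - 3) *
      ((2 * INR t1 + 1) - (2 * INR t3 + 1)) * (2 * INR t1 + 1))) t1) T).
  { apply psum_ext. intros t1 _. rewrite psum_triangle. apply psum_ext. intros t3 Ht3.
    unfold odd_harmonic. rewrite <- psum_scal_r. apply psum_ext. intros k Hk.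
    unfold pf_low. rewrite !Rinv_mult, plus_INR.
    replace (2 * (INR t3 + INR k) + 2 - (2 * INR t3 + 1)) with (2 * INR k + 1) by ring. ring. }
  rewrite psum_triangle_strict. apply psum_ext. intros t3 Ht3.
  unfold delta_sum, Rdiv. rewrite <- psum_scal_r. apply psum_ext. intros k Hk.
  replace (S t3 + k - t3)%nat with (S k) by lia.
  replace (w - 2)%nat with (S (w - 3)) by lia. simpl pow.
  rewrite plus_INR, !S_INR. pose proof (pos_INR t3). pose proof (pos_INR k).
  assert ((2 * INR t3 + 1) ^ (w - 3) <> 0) by (apply pow_nonzero; lra).
  field. repeat split; lra.
Qed.

Lemma is_lim_chain_at_pf_low w : (4 <= w)%nat ->
  is_lim_seq (chain_at (pf_low w))
    (seq_lim (odd_weighted (w - 2) pair_sum_eo) + odd_zeta2 / 3 * seq_lim (odd_zeta (w - 2))).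
Proof.
  intros Hw.
  apply is_lim_seq_ext with (1 := fun T => eq_sym (chain_at_pf_low w T ltac:(lia))).
  apply is_lim_seq_psum_diag with
      (G := fun t3 => (pair_sum_eo t3 + odd_zeta2 / 3) / (2 * INR t3 + 1) ^ (w - 2)).
  - intros T i. apply Rdiv_le_0_compat; [apply delta_sum_nonneg|apply pow_lt, odd_pos].
  - intros T i. unfold Rdiv. apply Rmult_le_compat_r.
    + left. apply Rinv_0_lt_compat, pow_lt, odd_pos.
    + apply delta_sum_le. lia.
  - intros i. apply is_lim_seq_scal_r with (lu := pair_sum_eo i + odd_zeta2 / 3).
    apply is_lim_seq_sub_shift, is_lim_delta_sum.
  - apply is_lim_seq_ext
      with (fun T => odd_weighted (w - 2) pair_sum_eo T + odd_zeta2 / 3 * odd_zeta (w - 2) T).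
    { intros T. unfold odd_weighted, odd_zeta. rewrite <- psum_scal_l, <- psum_plus.
      apply psum_ext. intros. unfold Rdiv. ring. }
    apply is_lim_seq_plus'; [|apply is_lim_seq_scal_l with (lu := seq_lim (odd_zeta (w - 2)))];
      apply is_lim_seq_lim.
    + apply ex_lim_odd_weighted; [lia|apply pair_sum_eo_bounds].
    + apply ex_lim_odd_zeta. lia.
Qed.

Lemma is_lim_chain_at_pf_mid w : (4 <= w)%nat ->
  is_lim_seq (chain_at (pf_mid w))
    (seq_lim (even_weighted (w - 2) (fun t => odd_harmonic (S t) ^ 2))).
Proof.
  intros Hw.
  apply is_lim_seq_ext with (1 := fun T => eq_sym (chain_at_pf_mid w T ltac:(lia))).
  apply is_lim_seq_psum_diag with (G := fun t2 => odd_harmonic (S t2) / (2 * INR t2 + 2) ^ (w - 3) *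
                                               (odd_harmonic (S t2) / (2 * INR (S t2)))).
  - intros T i. pose proof (pos_INR i). apply Rmult_le_pos; [|apply gap_sum_nonneg].
    apply Rdiv_le_0_compat; [apply odd_harmonic_nonneg|apply pow_lt; lra].
  - intros T i. pose proof (pos_INR i). apply Rmult_le_compat_l; [|apply gap_sum_le; lia].
    apply Rdiv_le_0_compat; [apply odd_harmonic_nonneg|apply pow_lt; lra].
  - intros i. apply is_lim_seq_scal_l with (lu := odd_harmonic (S i) / (2 * INR (S i))).
    apply is_lim_seq_sub_shift, is_lim_seq_gap_sum.
  - apply is_lim_seq_ext with (even_weighted (w - 2) (fun t => odd_harmonic (S t) ^ 2)).
    + intros T. apply psum_ext. intros t _. rewrite S_INR.
      replace (w - 2)%nat with (S (w - 3)) by lia. simpl pow. pose proof (pos_INR t).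
      assert ((2 * INR t + 2) ^ (w - 3) <> 0) by (apply pow_nonzero; lra).
      field. lra.
    + apply is_lim_seq_lim, ex_lim_even_weighted; [lia|].
      intros t. split; [apply pow2_ge_0|lra].
Qed.

Definition Tsum_trunc (w N : nat) : R :=
  sum_f_R0 (fun a => sum_f_R0 (fun b => sum_f_R0 (fun c =>
    if (Nat.eqb (a + b + c) w && Nat.leb 2 a && Nat.leb 1 b && Nat.leb 1 c)%bool
    then nsum (Tfactors (a :: b :: c :: nil)) N else 0) w) w) w.

Lemma Tsum_trunc_double w T : (4 <= w)%nat ->
  Tsum_trunc w (2 * T) = 8 * (chain_at (pf_low w) T - chain_at (pf_mid w) T + chain_at (pf_top w) T).
Proof.
  intros Hw. unfold Tsum_trunc.
  set (cnd := fun a b c =>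
    (Nat.eqb (a + b + c) w && Nat.leb 2 a && Nat.leb 1 b && Nat.leb 1 c)%bool).
  set (P := fun a b c t1 t2 t3 =>
    8 * / ((2 * INR t1 + 1) ^ a * (2 * INR t2 + 2) ^ b * (2 * INR t3 + 1) ^ c)).
  transitivity (chain_sum T (fun t1 t2 t3 => sum_f_R0 (fun a => sum_f_R0 (fun b => sum_f_R0 (fun c =>
      if cnd a b c then P a b c t1 t2 t3 else 0) w) w) w)).
  { rewrite <- sum_f_R0_chain_sum. apply sum_eq. intros a _.
    rewrite <- sum_f_R0_chain_sum. apply sum_eq. intros b _.
    rewrite <- sum_f_R0_chain_sum. apply sum_eq. intros c _.
    rewrite <- if_chain_sum, nsum_Tfactors3. reflexivity. }
  unfold chain_at. rewrite <- chain_sum_minus, <- chain_sum_plus, <- chain_sum_scal_l.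
  apply chain_sum_ext. intros t1 t2 t3 H12 H23. unfold cnd, P.
  assert (INR t3 <= INR t2) by (apply le_INR; lia).
  assert (INR t2 + 1 <= INR t1) by (rewrite <- S_INR; apply le_INR; lia).
  pose proof (pos_INR t3).
  rewrite <- (sum_compositions_inv_monomial w) by (assumption || lra).
  rewrite scal_sum. apply sum_eq. intros a _.
  rewrite (Rmult_comm (sum_f_R0 _ _)), scal_sum. apply sum_eq. intros b _.
  rewrite (Rmult_comm (sum_f_R0 _ _)), scal_sum. apply sum_eq. intros c _.
  destruct (_ && _)%bool; ring.
Qed.

Lemma Tsum_value w : (4 <= w)%nat ->
  sum_f_R0 (fun a => sum_f_R0 (fun b => sum_f_R0 (fun c =>
      if (Nat.eqb (a + b + c) w && Nat.leb 2 a && Nat.leb 1 b && Nat.leb 1 c)%bool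
      then Tval (a :: b :: c :: nil) else 0) w) w) w
  = 8 * (2 * seq_lim (odd_weighted (w - 2) pair_sum_eo)
         + odd_zeta2 / 3 * seq_lim (odd_zeta (w - 2))
         - seq_lim (even_weighted (w - 2) (fun t => odd_harmonic (S t) ^ 2))).
Proof.
  intros Hw.
  assert (Hfull : is_lim_seq (Tsum_trunc w) (sum_f_R0 (fun a => sum_f_R0 (fun b => sum_f_R0 (fun c =>
      if (Nat.eqb (a + b + c) w && Nat.leb 2 a && Nat.leb 1 b && Nat.leb 1 c)%bool
      then Tval (a :: b :: c :: nil) else 0) w) w) w)).
  { do 3 (apply is_lim_seq_sum_f_R0; intros ? _).
    destruct (_ && _)%bool eqn:E; [|apply is_lim_seq_const].
    rewrite !Bool.andb_true_iff, !Nat.leb_le in E. destruct E as [[[_ Ha] Hb] Hc].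
    now apply is_lim_nsum_Tfactors3. }
  assert (Hdouble : is_lim_seq (fun T => Tsum_trunc w (2 * T))
    (8 * ((seq_lim (odd_weighted (w - 2) pair_sum_eo) + odd_zeta2 / 3 * seq_lim (odd_zeta (w - 2)))
          - seq_lim (even_weighted (w - 2) (fun t => odd_harmonic (S t) ^ 2))
          + seq_lim (odd_weighted (w - 2) pair_sum_eo)))).
  { apply is_lim_seq_ext with (1 := fun T => eq_sym (Tsum_trunc_double w T Hw)).
    apply (is_lim_seq_scal_l _ 8 (Finite _)), is_lim_seq_plus'; [apply is_lim_seq_minus'|].
    - apply is_lim_chain_at_pf_low, Hw.
    - apply is_lim_chain_at_pf_mid, Hw.
    - apply is_lim_seq_ext with (1 := fun T => eq_sym (chain_at_pf_top w T)).
      apply is_lim_seq_lim, ex_lim_odd_weighted; [lia|apply pair_sum_eo_bounds]. }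
  apply is_lim_seq_double, is_lim_seq_unique in Hfull. apply is_lim_seq_unique in Hdouble.
  rewrite Hdouble in Hfull. apply Rbar_finite_eq in Hfull. rewrite <- Hfull. ring.
Qed.

(** * Alternating Euler sums of depth three *)

Definition harmonic (k : nat) : R := psum (fun j => / INR (S j)) k.

Lemma inv_INR_S_pos j : 0 < / INR (S j).
Proof. apply Rinv_0_lt_compat, lt_0_INR. lia. Qed.

Lemma harmonic_nonneg k : 0 <= harmonic k.
Proof. apply psum_nonneg. intros. left. apply inv_INR_S_pos. Qed.

Lemma harmonic_le_odd_harmonic t k : (k <= S (2 * t))%nat -> harmonic k <= 2 * odd_harmonic (S t).
Proof.
  intros Hk. apply Rle_trans with (harmonic (S (2 * t))).
  { apply psum_le_len; [|exact Hk]. intros. left. apply inv_INR_S_pos. }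
  unfold harmonic. rewrite psum_recr, psum_even_odd, odd_harmonic_S.
  unfold odd_harmonic. rewrite Rmult_plus_distr_l, <- psum_scal_l.
  enough (psum (fun t0 => / INR (S (2 * t0)) + / INR (S (S (2 * t0)))) t
          <= psum (fun t0 => 2 * / (2 * INR t0 + 1)) t /\ / INR (S (2 * t)) <= 2 * / (2 * INR t + 1))
    by lra.
  split.
  - apply psum_le. intros k0 _. rewrite INR_odd, (S_INR (S _)), INR_odd.
    pose proof (pos_INR k0).
    assert (/ (2 * INR k0 + 1 + 1) <= / (2 * INR k0 + 1)) by (apply Rinv_le_contravar; lra).
    lra.
  - rewrite INR_odd. pose proof (Rinv_0_lt_compat _ (odd_pos t)). lra.
Qed.

Lemma Efactor_abs s b m : Rabs (Efactor (s, b) (S m)) = / INR (S m) ^ s.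
Proof.
  unfold Efactor, Rdiv. cbn [fst snd]. rewrite Rabs_mult, (Rabs_right (/ _)).
  - destruct b; [rewrite pow_1_abs|rewrite Rabs_R1]; ring.
  - left. apply Rinv_0_lt_compat, pow_lt, lt_0_INR. lia.
Qed.

Lemma nsum_Efactor1_abs_le b1 b2 k :
  Rabs (nsum (Efactor (1%nat, b1) :: Efactor (1%nat, b2) :: nil) k) <= harmonic k ^ 2.
Proof.
  assert (Hinner : forall k, Rabs (nsum (Efactor (1%nat, b2) :: nil) k) <= harmonic k).
  { induction k0 as [|k0 IH]; [simpl; rewrite Rabs_R0; apply harmonic_nonneg|].
    rewrite nsum_cons in *. rewrite psum_recr. eapply Rle_trans; [apply Rabs_triang|].
    unfold harmonic. rewrite psum_recr. simpl nsum in IH |- *. rewrite Rmult_1_r, Efactor_abs, pow_1.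
    fold (harmonic k0). lra. }
  rewrite nsum_cons.
  apply Rle_trans with (psum (fun j => / INR (S j) * harmonic k) k).
  - apply Rle_trans with (psum (fun j => Rabs (Efactor (1%nat, b1) (S j) * nsum (Efactor (1%nat, b2) :: nil) j)) k).
    + clear. induction k as [|k IH]; [simpl; rewrite Rabs_R0; lra|].
      rewrite !psum_recr. eapply Rle_trans; [apply Rabs_triang|]. lra.
    + apply psum_le. intros j Hj. rewrite Rabs_mult, Efactor_abs, pow_1.
      apply Rmult_le_compat_l; [left; apply inv_INR_S_pos|].
      eapply Rle_trans; [apply Hinner|]. apply psum_le_len; [|lia].
      intros. left. apply inv_INR_S_pos.
  - rewrite psum_scal_r. fold (harmonic k). simpl. lra.
Qed.

Lemma harmonic_sq_div_le_majorant t :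
  / INR (S (2 * t)) ^ 2 * harmonic (2 * t) ^ 2
  + / INR (S (S (2 * t))) ^ 2 * harmonic (S (2 * t)) ^ 2 <= 8 * majorant t.
Proof.
  rewrite INR_odd, INR_even. unfold majorant, Rdiv. pose proof (pos_INR t).
  assert (Hsq : forall k, (k <= S (2 * t))%nat -> harmonic k ^ 2 <= 4 * odd_harmonic (S t) ^ 2).
  { intros k Hk. replace (4 * odd_harmonic (S t) ^ 2) with ((2 * odd_harmonic (S t)) ^ 2) by ring.
    apply pow_incr. split; [apply harmonic_nonneg|apply harmonic_le_odd_harmonic, Hk]. }
  assert (Hinv : / (2 * INR t + 2) ^ 2 <= / (2 * INR t + 1) ^ 2)
    by (apply Rinv_le_contravar; [apply pow_lt; lra|apply pow_incr; lra]).
  assert (0 < / (2 * INR t + 2) ^ 2) by (apply Rinv_0_lt_compat, pow_lt; lra).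
  pose proof (Hsq (2 * t)%nat ltac:(lia)). pose proof (Hsq (S (2 * t)) ltac:(lia)).
  pose proof (pow2_ge_0 (harmonic (S (2 * t)))). pose proof (pow2_ge_0 (odd_harmonic (S t))).
  nra.
Qed.

Lemma ex_series_harmonic_sq_div : ex_series (fun k => / INR (S k) ^ 2 * harmonic k ^ 2).
Proof.
  set (b := fun k => / INR (S k) ^ 2 * harmonic k ^ 2).
  assert (Hb0 : forall k, 0 <= b k).
  { intros k. apply Rmult_le_pos; [|apply pow2_ge_0].
    left. apply Rinv_0_lt_compat, pow_lt, lt_0_INR. lia. }
  assert (Hb : forall T, psum b (2 * T) <= 48).
  { intros T. rewrite psum_even_odd. replace 48 with (8 * 6) by ring.
    eapply Rle_trans; [|apply Rmult_le_compat_l; [lra|apply (psum_majorant_le T)]].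
    rewrite <- psum_scal_l. apply psum_le. intros t _. apply harmonic_sq_div_le_majorant. }
  destruct (ex_lim_seq_incr_bounded (sum_n b) 48) as [l Hl].
  - intros n. rewrite !sum_n_Reals, !sum_f_R0_psum, (psum_recr _ (S n)). specialize (Hb0 (S n)). lra.
  - intros n. rewrite sum_n_Reals, sum_f_R0_psum. eapply Rle_trans; [|apply (Hb (S n))].
    apply psum_le_len; [exact Hb0|lia].
  - now exists l.
Qed.

Lemma ex_lim_Ezeta3 s b1 b2 b3 : (2 <= s)%nat ->
  exists l : R, is_lim_seq (nsum (map Efactor ((s, b1) :: (1%nat, b2) :: (1%nat, b3) :: nil))) l.
Proof.
  intros Hs.
  set (a := fun k => Efactor (s, b1) (S k) * nsum (Efactor (1%nat, b2) :: Efactor (1%nat, b3) :: nil) k).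
  assert (Hab : forall k, norm (a k) <= / INR (S k) ^ 2 * harmonic k ^ 2).
  { intros k. change (norm (a k)) with (Rabs (a k)). unfold a. rewrite Rabs_mult, Efactor_abs.
    apply Rmult_le_compat; [left; apply Rinv_0_lt_compat, pow_lt, lt_0_INR; lia|apply Rabs_pos| |].
    - apply inv_pow_le_inv_sq; [rewrite S_INR; pose proof (pos_INR k); lra|exact Hs].
    - apply nsum_Efactor1_abs_le. }
  destruct (ex_series_le a _ Hab ex_series_harmonic_sq_div) as [l Hl].
  exists l. apply is_lim_seq_incr_1. apply is_lim_seq_ext with (sum_n a); [|exact Hl].
  intros N. rewrite sum_n_Reals, sum_f_R0_psum. simpl map. now rewrite nsum_cons.
Qed.

(* [pair_sum_oo t] is the sum of 1/(m2 m3) over odd m2 > odd m3 with m2 <= 2t+1. *)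
Definition pair_sum_oo (t : nat) : R := psum (fun t2 => odd_harmonic t2 / (2 * INR t2 + 1)) (S t).

Lemma pair_sum_oo_bounds t : 0 <= pair_sum_oo t <= odd_harmonic (S t) ^ 2.
Proof.
  split.
  - apply psum_nonneg. intros. apply Rdiv_le_0_compat; [apply odd_harmonic_nonneg|apply odd_pos].
  - apply Rle_trans with (psum (fun k => odd_harmonic (S t) * / (2 * INR k + 1)) (S t)).
    + apply psum_le. intros k Hk. apply Rmult_le_compat_r; [left; apply Rinv_0_lt_compat, odd_pos|].
      apply odd_harmonic_le. lia.
    + rewrite psum_scal_l. fold (odd_harmonic (S t)). simpl. lra.
Qed.

Lemma odd_harmonic_sq t : odd_harmonic (S t) ^ 2 = 2 * pair_sum_oo t + odd_zeta 2 (S t).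
Proof.
  induction t as [|t IH].
  - unfold pair_sum_oo, odd_zeta, odd_harmonic. simpl. field.
  - rewrite odd_harmonic_S. unfold pair_sum_oo, odd_zeta. rewrite !(psum_recr _ (S t)).
    fold (pair_sum_oo t) (odd_zeta 2 (S t)).
    replace (pair_sum_oo t) with ((odd_harmonic (S t) ^ 2 - odd_zeta 2 (S t)) / 2) by lra.
    pose proof (odd_pos (S t)). field. lra.
Qed.

Definition twice_odd_harmonic (j : nat) : R := psum (fun i => (1 - (-1) ^ (S i)) / INR (S i)) j.

Definition euler_diff2 (b : bool) (k : nat) : R :=
  psum (fun j => Efactor (1%nat, b) (S j) * twice_odd_harmonic j) k.

Lemma nsum_Efactor_diff b k :
  nsum (Efactor (1%nat, b) :: Efactor (1%nat, false) :: nil) k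
  - nsum (Efactor (1%nat, b) :: Efactor (1%nat, true) :: nil) k = euler_diff2 b k.
Proof.
  rewrite !nsum_cons, <- psum_minus. apply psum_ext. intros j _.
  rewrite <- Rmult_minus_distr_l, !nsum_cons, <- psum_minus. f_equal.
  apply psum_ext. intros i _. unfold Efactor. cbn [fst snd nsum]. rewrite !pow_1. unfold Rdiv. ring.
Qed.

Lemma pow_m1_even t : (-1) ^ (S (S (2 * t))) = 1.
Proof. replace (S (S (2 * t))) with (2 * S t)%nat by lia. apply pow_1_even. Qed.

Lemma twice_odd_harmonic_even t : twice_odd_harmonic (2 * t) = 2 * odd_harmonic t.
Proof.
  unfold twice_odd_harmonic, odd_harmonic. rewrite psum_even_odd, <- psum_scal_l.
  apply psum_ext. intros k _. rewrite pow_1_odd, pow_m1_even, INR_odd, INR_even.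
  pose proof (odd_pos k). field. lra.
Qed.

Lemma twice_odd_harmonic_odd t : twice_odd_harmonic (S (2 * t)) = 2 * odd_harmonic (S t).
Proof.
  unfold twice_odd_harmonic. rewrite psum_recr. fold (twice_odd_harmonic (2 * t)).
  rewrite twice_odd_harmonic_even, odd_harmonic_S, pow_1_odd, INR_odd.
  pose proof (odd_pos t). field. lra.
Qed.

Lemma Efactor1_odd b t :
  Efactor (1%nat, b) (S (2 * t)) = (if b then -1 else 1) / (2 * INR t + 1).
Proof. unfold Efactor. cbn [fst snd]. rewrite pow_1, INR_odd, pow_1_odd. reflexivity. Qed.

Lemma Efactor1_even b t : Efactor (1%nat, b) (S (S (2 * t))) = 1 / (2 * INR t + 2).
Proof. unfold Efactor. cbn [fst snd]. rewrite pow_1, INR_even, pow_m1_even. now destruct b. Qed.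

Lemma euler_diff2_plus t : euler_diff2 true (2 * t) + euler_diff2 false (2 * t) = 4 * pair_sum_eo t.
Proof.
  unfold euler_diff2. rewrite <- psum_plus, psum_even_odd. unfold pair_sum_eo.
  rewrite <- psum_scal_l. apply psum_ext. intros k _.
  rewrite twice_odd_harmonic_even, twice_odd_harmonic_odd, !Efactor1_odd, !Efactor1_even.
  pose proof (odd_pos k). field. lra.
Qed.

Lemma euler_diff2_minus t :
  euler_diff2 true (S (2 * t)) - euler_diff2 false (S (2 * t)) = - 4 * pair_sum_oo t.
Proof.
  unfold euler_diff2. rewrite <- psum_minus, psum_recr, psum_even_odd.
  unfold pair_sum_oo. rewrite psum_recr, Rmult_plus_distr_l, <- psum_scal_l. f_equal.
  - apply psum_ext. intros k _.
    rewrite twice_odd_harmonic_even, twice_odd_harmonic_odd, !Efactor1_odd, !Efactor1_even.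
    pose proof (odd_pos k). field. lra.
  - rewrite twice_odd_harmonic_even, !Efactor1_odd. pose proof (odd_pos t). field. lra.
Qed.

Lemma Ezeta_comb_trunc s T :
  nsum (map Efactor ((s, false) :: (1%nat, true) :: (1%nat, false) :: nil)) (2 * T)
  - nsum (map Efactor ((s, true) :: (1%nat, false) :: (1%nat, false) :: nil)) (2 * T)
  + nsum (map Efactor ((s, true) :: (1%nat, false) :: (1%nat, true) :: nil)) (2 * T)
  - nsum (map Efactor ((s, false) :: (1%nat, true) :: (1%nat, true) :: nil)) (2 * T)
  = 4 * (odd_weighted s pair_sum_eo T - even_weighted s pair_sum_oo T).
Proof.
  simpl map. rewrite !(nsum_cons (Efactor (s, _))), <- !psum_minus, <- psum_plus, <- psum_minus.
  rewrite (psum_ext _ (fun k => Efactor (s, false) (S k) * euler_diff2 true k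
                               - Efactor (s, true) (S k) * euler_diff2 false k)).
  2:{ intros k _. rewrite <- !nsum_Efactor_diff. ring. }
  rewrite psum_even_odd. unfold odd_weighted, even_weighted.
  rewrite <- psum_minus, <- psum_scal_l. apply psum_ext. intros t _.
  unfold Efactor. cbn [fst snd]. rewrite pow_1_odd, pow_m1_even, INR_odd, INR_even.
  replace (euler_diff2 true (S (2 * t))) with (euler_diff2 false (S (2 * t)) - 4 * pair_sum_oo t)
    by (pose proof (euler_diff2_minus t); lra).
  replace (euler_diff2 true (2 * t)) with (4 * pair_sum_eo t - euler_diff2 false (2 * t))
    by (pose proof (euler_diff2_plus t); lra).
  unfold Rdiv. ring.
Qed.

Lemma Ezeta_comb s : (2 <= s)%nat ->
  Ezeta ((s, false) :: (1%nat, true) :: (1%nat, false) :: nil)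
  - Ezeta ((s, true) :: (1%nat, false) :: (1%nat, false) :: nil)
  + Ezeta ((s, true) :: (1%nat, false) :: (1%nat, true) :: nil)
  - Ezeta ((s, false) :: (1%nat, true) :: (1%nat, true) :: nil)
  = 4 * (seq_lim (odd_weighted s pair_sum_eo) - seq_lim (even_weighted s pair_sum_oo)).
Proof.
  intros Hs. unfold Ezeta.
  destruct (ex_lim_Ezeta3 s false true false Hs) as [l1 H1].
  destruct (ex_lim_Ezeta3 s true false false Hs) as [l2 H2].
  destruct (ex_lim_Ezeta3 s true false true Hs) as [l3 H3].
  destruct (ex_lim_Ezeta3 s false true true Hs) as [l4 H4].
  rewrite (nseries_eq _ l1 H1), (nseries_eq _ l2 H2), (nseries_eq _ l3 H3), (nseries_eq _ l4 H4).
  apply is_lim_seq_double in H1, H2, H3, H4.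
  assert (Hcomb : is_lim_seq
    (fun T => 4 * (odd_weighted s pair_sum_eo T - even_weighted s pair_sum_oo T)) (l1 - l2 + l3 - l4)).
  { apply is_lim_seq_ext with (1 := Ezeta_comb_trunc s).
    apply is_lim_seq_minus'; [apply is_lim_seq_plus'; [apply is_lim_seq_minus'|]|]; assumption. }
  assert (Hlim : is_lim_seq
    (fun T => 4 * (odd_weighted s pair_sum_eo T - even_weighted s pair_sum_oo T))
    (4 * (seq_lim (odd_weighted s pair_sum_eo) - seq_lim (even_weighted s pair_sum_oo)))).
  { apply (is_lim_seq_scal_l _ 4 (Finite _)), is_lim_seq_minus'; apply is_lim_seq_lim.
    - apply ex_lim_odd_weighted; [exact Hs|apply pair_sum_eo_bounds].
    - apply ex_lim_even_weighted; [exact Hs|apply pair_sum_oo_bounds]. }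
  apply is_lim_seq_unique in Hcomb, Hlim. rewrite Hlim in Hcomb.
  apply Rbar_finite_eq in Hcomb. now symmetry.
Qed.

Lemma seq_lim_even_weighted_odd_harmonic_sq s : (2 <= s)%nat ->
  seq_lim (even_weighted s (fun t => odd_harmonic (S t) ^ 2))
  = 2 * seq_lim (even_weighted s pair_sum_oo)
    + seq_lim (even_weighted s (fun t => odd_zeta 2 (S t))).
Proof.
  intros Hs. apply seq_lim_eq.
  apply is_lim_seq_ext
    with (fun T => 2 * even_weighted s pair_sum_oo T + even_weighted s (fun t => odd_zeta 2 (S t)) T).
  - intros T. unfold even_weighted. rewrite <- psum_scal_l, <- psum_plus.
    apply psum_ext. intros t _. rewrite odd_harmonic_sq. unfold Rdiv. ring.
  - apply is_lim_seq_plus'; [apply (is_lim_seq_scal_l _ 2 (Finite _))|]; apply is_lim_seq_lim.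
    + apply ex_lim_even_weighted; [exact Hs|apply pair_sum_oo_bounds].
    + apply ex_lim_even_weighted; [exact Hs|]. intros t. apply odd_zeta_bounds. lia.
Qed.

Theorem theorem5p5 (w : nat) (hw : (4 <= w)%nat) :
  let u := (w - 2)%nat in
  sum_f_R0 (fun a => sum_f_R0 (fun b => sum_f_R0 (fun c =>
      if (Nat.eqb (a + b + c) w && Nat.leb 2 a && Nat.leb 1 b && Nat.leb 1 c)%bool
      then Tval (a :: b :: c :: nil) else 0) w) w) w
  = 2 / 3 * Tval (2%nat :: nil) * Tval (u :: nil) - 2 * Tval (u :: 2%nat :: nil)
    + 4 * ( Ezeta ((u, false) :: (1%nat, true) :: (1%nat, false) :: nil)
          - Ezeta ((u, true) :: (1%nat, false) :: (1%nat, false) :: nil)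
          + Ezeta ((u, true) :: (1%nat, false) :: (1%nat, true) :: nil)
          - Ezeta ((u, false) :: (1%nat, true) :: (1%nat, true) :: nil)).
Proof.
  intros u. unfold u.
  rewrite Tsum_value, seq_lim_even_weighted_odd_harmonic_sq by lia.
  rewrite (Tval_single 2), (Tval_single (w - 2)), Tval_pair, Ezeta_comb by lia.
  unfold odd_zeta2, Rdiv. ring.
Qed.
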